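(* Let $G \le \mathrm{Sym}(\mathbb{N})$ be a countable cofinitary group, let $F \subseteq \mathrm{Sym}(\mathbb{N})\setminus G$ be a countable family of permutations such that for every $f\in F$ the group $\langle G, f\rangle$ is cofinitary, and let $z \in 2^{\mathbb{N}}$. Then there exists $g \in \mathrm{Sym}(\mathbb{N})$ such that $\langle G, g\rangle$ is cofinitary, for every $f \in F$ the set $\{n : f(n)=g(n)\}$ is infinite, and $z$ is recursive in $w(g)$ for every $w \in W_G \setminus G$.
   Context: $\mathrm{Sym}(\mathbb{N})$ is the group of bijections of $\mathbb{N}$; a subgroup is cofinitary if each non-identity element has finitely many fixed points. $\langle G, g\rangle$ denotes the subgroup generated by $G\cup\{g\}$. $W_G$ is the free product $G * F(x)$ of $G$ with the free group on one generator $x$; for $w \in W_G$ and a permutation $g$, $w(g)$ denotes the permutation obtained by substituting $g$ for $x$ and evaluating in $\mathrm{Sym}(\mathbb{N})$; $G$ is regarded as a subset of $W_G$ (words containing no $x$). *)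

(* Permutations of N are represented as functions nat -> nat
   (with bijectivity stated explicitly); sets of permutations as predicates. *)
From Stdlib Require Import Arith List ZArith.
Import ListNotations.

Definition is_bij (f : nat -> nat) : Prop :=
  exists h : nat -> nat, (forall n, f (h n) = n) /\ (forall n, h (f n) = n).

Definition IsSubgroup (G : (nat -> nat) -> Prop) : Prop :=
  (forall f, G f -> is_bij f) /\
  G (fun n => n) /\
  (forall f h, G f -> G h -> G (fun n => f (h n))) /\
  (forall f h, G f -> (forall n, f (h n) = n) -> (forall n, h (f n) = n) -> G h).

Definition Cofinitary (G : (nat -> nat) -> Prop) : Prop :=
  forall f, G f -> (exists n, f n <> n) ->
    exists N, forall n, f n = n -> n < N.

Definition CountableSet (S : (nat -> nat) -> Prop) : Prop :=
  exists e : nat -> (nat -> nat), forall f, S f -> exists k, e k = f.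

Inductive gen (S : (nat -> nat) -> Prop) : (nat -> nat) -> Prop :=
| gen_base f : S f -> gen S f
| gen_id : gen S (fun n => n)
| gen_comp f h : gen S f -> gen S h -> gen S (fun n => f (h n))
| gen_inv f h : gen S f -> (forall n, f (h n) = n) -> (forall n, h (f n) = n) ->
    gen S h.

Definition genWith (G : (nat -> nat) -> Prop) (g : nat -> nat) :=
  gen (fun f => G f \/ f = g).

(* a letter is a non-identity element of G or a non-zero power x^k *)
Inductive letter : Type :=
| LG (h : nat -> nat)
| LX (k : Z).

Definition letter_ok (G : (nat -> nat) -> Prop) (a : letter) : Prop :=
  match a with
  | LG h => G h /\ exists n, h n <> n
  | LX k => k <> 0%Z
  end.

Definition same_kind (a b : letter) : Prop :=
  match a, b with
  | LG _, LG _ => True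
  | LX _, LX _ => True
  | _, _ => False
  end.

Fixpoint alternating (w : list letter) : Prop :=
  match w with
  | [] => True
  | a :: w' =>
      match w' with
      | [] => True
      | b :: _ => ~ same_kind a b /\ alternating w'
      end
  end.

(* reduced words = normal forms of elements of G * F(x) *)
Definition ReducedWord (G : (nat -> nat) -> Prop) (w : list letter) : Prop :=
  Forall (letter_ok G) w /\ alternating w.

(* the element represented by w lies outside G iff its normal form contains x *)
Definition has_x (w : list letter) : Prop :=
  exists k, In (LX k) w.

(* w(g): substitute g for x (ginv is the inverse permutation of g) *)
Definition letter_eval (g ginv : nat -> nat) (a : letter) : nat -> nat :=
  match a with
  | LG h => h
  | LX k => fun n => Nat.iter (Z.abs_nat k) (if (0 <? k)%Z then g else ginv) n
  end.

Definition word_eval (g ginv : nat -> nat) (w : list letter) : nat -> nat :=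
  fold_right (fun a acc => fun n => letter_eval g ginv a (acc n)) (fun n => n) w.

Inductive prf : Type :=
| PZero
| PSucc
| PProj (i : nat)
| POracle
| PComp (f : prf) (gs : list prf)
| PPrimRec (f g : prf)
| PMu (f : prf).

Inductive peval (o : nat -> nat) : prf -> list nat -> nat -> Prop :=
| ev_zero v : peval o PZero v 0
| ev_succ x v : peval o PSucc (x :: v) (S x)
| ev_proj i v : i < length v -> peval o (PProj i) v (nth i v 0)
| ev_oracle x v : peval o POracle (x :: v) (o x)
| ev_comp f gs v ys y :
    pevalL o gs v ys -> peval o f ys y -> peval o (PComp f gs) v y
| ev_pr0 f g v y : peval o f v y -> peval o (PPrimRec f g) (0 :: v) y
| ev_prS f g n v r y :
    peval o (PPrimRec f g) (n :: v) r -> peval o g (n :: r :: v) y ->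
    peval o (PPrimRec f g) (S n :: v) y
| ev_mu f v n :
    peval o f (n :: v) 0 ->
    (forall m, m < n -> exists k, peval o f (m :: v) (S k)) ->
    peval o (PMu f) v n
with pevalL (o : nat -> nat) : list prf -> list nat -> list nat -> Prop :=
| evL_nil v : pevalL o [] v []
| evL_cons f fs v y ys :
    peval o f v y -> pevalL o fs v ys -> pevalL o (f :: fs) v (y :: ys).

Definition RecursiveIn (z : nat -> bool) (o : nat -> nat) : Prop :=
  exists e : prf, forall n, peval o e [n] (if z n then 1 else 0).

From Stdlib Require Import Arith List Lia ZArith Classical ClassicalEpsilon
  FunctionalExtensionality Cantor.
From Stdlib Require FinFun.
Import ListNotations.

(* The permutation g is built as the union of an increasing chain of finite
   partial injections p_0 ⊆ p_1 ⊆ ..., each step adding edges (a, g a) one at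
   a time.  Words of G * <x> are handled as lists of letters (elements of G,
   x or x⁻¹), read left to right.  The heart of the proof is the SAFE EDGE
   LEMMA: an edge a ↦ m, with m fresh and far enough from the finitely many
   letters of finitely many cyclically reduced words, creates no new fixed
   point of those words.  Stage s of the construction only adds safe edges
   for the first s words, so the fixed points of a cyclically reduced word are
   frozen from some stage on; as they are finite at that stage, every word
   containing x has finitely many fixed points, i.e. <G, g> is cofinitary
   (after reducing arbitrary words to cyclically reduced conjugates).
   Within the same stages g is forced to agree with each f ∈ F at arbitrarily
   large points (cofinitarity of <G, f> makes such edges safe), to be total
   and onto, and to code z: for each word w, a sequence of "start points"
   c_0, c_1, ... is maintained with w(g)(c_j) of parity z j and
   c_(j+1) = w(g)(c_j) + d_(z j) for fixed gaps d_0, d_1.  This recursion is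
   a primitive recursive computation relative to the oracle w(g), which
   yields the computability of z in w(g). *)

(* A letter: an element of G, or x (true) or x⁻¹ (false). *)
Inductive sym : Type := SG (h : nat -> nat) | SX (b : bool).

(** * Finite partial injections and paths along words *)

(* One letter step from a to c, where x is interpreted by the finite
   partial function p, given as its list of pairs (a, g a). *)
Definition step (p : list (nat * nat)) (t : sym) (a c : nat) : Prop :=
  match t with
  | SG h => c = h a
  | SX true => In (a, c) p
  | SX false => In (c, a) p
  end.

Fixpoint path (p : list (nat * nat)) (l : list sym) (a c : nat) : Prop :=
  match l with
  | [] => c = a
  | t :: l' => exists b, step p t a b /\ path p l' b c
  end.

Definition dom (p : list (nat * nat)) (a : nat) : Prop := exists b, In (a, b) p.
Definition ran (p : list (nat * nat)) (b : nat) : Prop := exists a, In (a, b) p.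

Definition points (p : list (nat * nat)) : list nat :=
  flat_map (fun '(x, y) => [x; y]) p.
Definition occurs (p : list (nat * nat)) (x : nat) : Prop := In x (points p).

Lemma occurs_dom p x : dom p x -> occurs p x.
Proof. intros [b H]. apply in_flat_map. exists (x, b). simpl; auto. Qed.

Lemma occurs_ran p x : ran p x -> occurs p x.
Proof. intros [b H]. apply in_flat_map. exists (b, x). simpl; auto. Qed.

Lemma occurs_inv p x : occurs p x -> dom p x \/ ran p x.
Proof.
  intros H. apply in_flat_map in H. destruct H as [[u v] [Hin H]].
  simpl in H. destruct H as [<-|[<-|[]]]; [left|right]; eexists; eauto.
Qed.

Lemma occurs_cons e p x : occurs (e :: p) x <-> x = fst e \/ x = snd e \/ occurs p x.
Proof. destruct e as [u v]. unfold occurs, points; simpl. intuition. Qed.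

Lemma step_X_occurs p b x y : step p (SX b) x y -> occurs p x /\ occurs p y.
Proof.
  destruct b; simpl; intros H; split;
    solve [apply occurs_dom; eexists; eauto | apply occurs_ran; eexists; eauto].
Qed.

Lemma path_app p l1 l2 a c :
  path p (l1 ++ l2) a c <-> exists b, path p l1 a b /\ path p l2 b c.
Proof.
  revert a; induction l1 as [|t l1 IH]; intros a; simpl.
  - split; [intros H; exists a; auto | intros [b [-> H]]; auto].
  - split.
    + intros [b [Hs Hp]]. apply IH in Hp. destruct Hp as [b' [H1 H2]]. eauto.
    + intros [b [[b' [Hs Hp]] H2]]. exists b'. split; auto. apply IH. eauto.
Qed.

Lemma step_mono p q t a c : incl p q -> step p t a c -> step q t a c.
Proof. destruct t as [h|[|]]; simpl; auto. Qed.

Lemma path_mono p q l a c : incl p q -> path p l a c -> path q l a c.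
Proof.
  intros Hi; revert a; induction l; simpl; auto.
  intros a0 [b [H1 H2]]. exists b; split; eauto using step_mono.
Qed.

(** * Reduced and cyclically reduced words *)

Definition compatible (t t' : sym) : Prop :=
  match t, t' with
  | SG _, SG _ => False
  | SX b, SX b' => b = b'
  | _, _ => True
  end.

Fixpoint chain (l : list sym) : Prop :=
  match l with
  | t :: ((t' :: _) as l') => compatible t t' /\ chain l'
  | _ => True
  end.

Definition hasX (l : list sym) : Prop := exists b, In (SX b) l.

Definition cyc_closed (l : list sym) : Prop :=
  match l with [] => True | t :: _ => compatible (last l t) t end.

Definition cyc_reduced (w : list sym) : Prop := chain w /\ hasX w /\ cyc_closed w.

Lemma chain_tail t l : chain (t :: l) -> chain l.
Proof. destruct l; simpl; tauto. Qed.

Lemma chain_mid l1 t1 t2 l2 : chain (l1 ++ t1 :: t2 :: l2) -> compatible t1 t2.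
Proof.
  induction l1 as [|a l1 IH]; simpl; [tauto|].
  intros H. apply IH. destruct l1; simpl in *; tauto.
Qed.

Lemma chain_app_l l1 l2 : chain (l1 ++ l2) -> chain l1.
Proof.
  induction l1 as [|a l1 IH]; simpl; auto. destruct l1 as [|b l1]; simpl in *; auto. tauto.
Qed.

Lemma chain_app l1 l2 : chain l1 -> chain l2 ->
  (forall t1 t2 l1' l2', l1 = l1' ++ [t1] -> l2 = t2 :: l2' -> compatible t1 t2) ->
  chain (l1 ++ l2).
Proof.
  induction l1 as [|a l1 IH]; simpl; auto. intros H1 H2 H.
  destruct l1 as [|b l1].
  - destruct l2 as [|c l2]; simpl; auto. split; auto. apply (H a c [] l2); auto.
  - simpl. split; [tauto|]. apply IH; auto; [tauto|].
    intros t1 t2 l1' l2' E1 E2. apply (H t1 t2 (a :: l1') l2'); auto. rewrite E1; reflexivity.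
Qed.

Lemma chain_snoc l t : chain l -> (l = [] \/ compatible (last l t) t) -> chain (l ++ [t]).
Proof.
  intros Hl Ht. apply chain_app; simpl; auto.
  intros t1 t2 l1' l2' E1 [= <- _]. destruct Ht as [->|Ht]; [destruct l1'; discriminate|].
  rewrite E1, last_last in Ht. exact Ht.
Qed.

Lemma last_def (l : list sym) : forall t d d', last (t :: l) d = last (t :: l) d'.
Proof.
  induction l as [|x l IH]; intros t d d'; [reflexivity|].
  change (last (t :: x :: l) d) with (last (x :: l) d).
  change (last (t :: x :: l) d') with (last (x :: l) d'). apply IH.
Qed.

Lemma cyc_closed_last t w l1 x : t :: w = l1 ++ [x] -> cyc_closed (t :: w) -> compatible x t.
Proof. intros E H. unfold cyc_closed in H. rewrite E in H at 1. rewrite last_last in H. exact H. Qed.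

Lemma path_end_SG p l x y : chain l -> path p l x y -> l <> [] -> ~ occurs p y ->
  exists h l3 y0, l = l3 ++ [SG h] /\ path p l3 x y0 /\ y = h y0 /\ (l3 = [] \/ occurs p y0).
Proof.
  intros Hc Hp Hne HD. destruct (exists_last Hne) as [l' [t E]]. subst l.
  apply path_app in Hp. destruct Hp as [y0 [H1 [b [Hs Hb]]]]. simpl in Hb. subst b.
  destruct t as [h|bx]; [|exfalso; exact (HD (proj2 (step_X_occurs _ _ _ _ Hs)))].
  exists h, l', y0. simpl in Hs. repeat split; auto.
  destruct l' as [|t' l'']; [auto|right].
  destruct (exists_last (l := t' :: l'') ltac:(discriminate)) as [l4 [t4 E4]].
  rewrite E4 in Hc, H1. rewrite <- app_assoc in Hc. apply chain_mid in Hc.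
  destruct t4 as [|b4]; [contradiction|].
  apply path_app in H1. destruct H1 as [u [_ [v [Hs4 Hv]]]]. simpl in Hv. subst v.
  exact (proj2 (step_X_occurs _ _ _ _ Hs4)).
Qed.

(** * The safe edge lemma *)

(* Adding the edge n ↦ m to p, where m is new, creates no new fixed point of
   a cyclically reduced word all of whose letters h of G are safe for the
   target m: h neither sends m nor comes to m from a point known to p or
   equal to n, and h m ≠ m.  Then a path through m can only leave m by one
   letter of G into the void, and can only reach m from its start point. *)
Section SafeEdge.
Variables (p : list (nat * nat)) (n m : nat).
Hypothesis Hm : ~ occurs p m.
Hypothesis Hmn : m <> n.

Definition safe_letter (h : nat -> nat) : Prop :=
  ~ occurs p (h m) /\ h m <> n /\ h m <> m /\
  forall b, h b = m -> ~ occurs p b /\ b <> n.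

Definition safe_letters (l : list sym) : Prop := forall h, In (SG h) l -> safe_letter h.

Lemma safe_letters_cons t l : safe_letters (t :: l) -> safe_letters l.
Proof. intros H h Hi. apply H. simpl; auto. Qed.

Lemma stuck_at x b y : ~ occurs p x -> x <> n -> x <> m -> ~ step ((n, m) :: p) (SX b) x y.
Proof.
  intros H1 H2 H3 Hs. destruct b; simpl in Hs; destruct Hs as [E|Hs];
    try (injection E; intros; congruence).
  - exact (H1 (proj1 (step_X_occurs p true _ _ Hs))).
  - exact (H1 (proj2 (step_X_occurs p true _ _ Hs))).
Qed.

Lemma path_after_target l c : chain (SX true :: l) -> safe_letters l ->
  path ((n, m) :: p) l m c -> (l = [] /\ c = m) \/ (exists h, l = [SG h] /\ c = h m).
Proof.
  intros Hc HL Hp. destruct l as [|t l]; [simpl in Hp; auto|].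
  destruct t as [h|[|]].
  - simpl in Hp. destruct Hp as [b [-> Hp]]. right. exists h.
    destruct l as [|t l]; [simpl in Hp; subst; auto|].
    exfalso. simpl in Hc. destruct Hc as [_ [Hc _]].
    destruct t as [h'|bb]; [contradiction|].
    destruct (HL h (or_introl eq_refl)) as [H1 [H2 [H3 _]]].
    destruct Hp as [b' [Hs _]]. exact (stuck_at _ _ _ H1 H2 H3 Hs).
  - exfalso. simpl in Hp. destruct Hp as [b [[E|Hs] _]].
    + injection E; intros; congruence.
    + apply Hm, occurs_dom. eexists; eauto.
  - exfalso. simpl in Hc. destruct Hc as [Hc _]. discriminate.
Qed.

Lemma new_edge_path l : forall a c, chain l -> safe_letters l -> a <> m ->
  (forall h l', l = SG h :: l' -> h a = m -> l' = []) -> path ((n, m) :: p) l a c ->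
  path p l a c \/
  exists l1 l2, l = l1 ++ SX true :: l2 /\ path p l1 a n /\
    ((l2 = [] /\ c = m) \/ exists h, l2 = [SG h] /\ c = h m).
Proof.
  induction l as [|t l IH]; intros a c Hc HL Ha Hinv Hp; [left; auto|].
  pose proof (chain_tail _ _ Hc) as Hc'.
  pose proof (safe_letters_cons _ _ HL) as HL'.
  assert (Hcont : forall b, step p t a b -> b <> m ->
    (forall h0 l', l = SG h0 :: l' -> h0 b = m -> l' = []) -> path ((n, m) :: p) l b c ->
    path p (t :: l) a c \/ exists l1 l2, t :: l = l1 ++ SX true :: l2 /\ path p l1 a n /\
      ((l2 = [] /\ c = m) \/ exists h, l2 = [SG h] /\ c = h m)).
  { intros b Hs Hb Hinv' Hp'.
    destruct (IH b c Hc' HL' Hb Hinv' Hp') as [H|[l1 [l2 [-> [H1 H2]]]]].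
    - left. exists b. auto.
    - right. exists (t :: l1), l2. split; auto. split; auto. exists b; auto. }
  assert (Hno_pre : forall b, occurs p b -> forall h0 l', l = SG h0 :: l' -> h0 b = m -> l' = []).
  { intros b Hb h0 l' -> E. exfalso.
    destruct (HL h0 (or_intror (or_introl eq_refl))) as [_ [_ [_ H4]]].
    exact (proj1 (H4 b E) Hb). }
  simpl in Hp. destruct Hp as [b [Hs Hp]]. destruct t as [h|[|]].
  - simpl in Hs. subst b. destruct (Nat.eq_dec (h a) m) as [E|E].
    + specialize (Hinv h l eq_refl E). subst l. simpl in Hp. left. simpl. exists (h a); auto.
    + apply (Hcont (h a)); [reflexivity | exact E | | exact Hp].
      intros h0 l' -> _. simpl in Hc. destruct Hc as [[] _].
  - destruct Hs as [E|Hs].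
    + injection E as <- <-. right. exists [], l. split; auto. split; simpl; auto.
      apply path_after_target; auto.
    + assert (Hb : occurs p b) by (apply occurs_ran; eexists; eauto).
      apply (Hcont b); [exact Hs | | exact (Hno_pre b Hb) | exact Hp].
      intros ->. contradiction.
  - destruct Hs as [E|Hs]; [injection E; intros; congruence|].
    assert (Hb : occurs p b) by (apply occurs_dom; eexists; eauto).
    apply (Hcont b); [exact Hs | | exact (Hno_pre b Hb) | exact Hp].
    intros ->. contradiction.
Qed.

Lemma safe_no_preimage_n l : safe_letters l -> forall h l', l = SG h :: l' -> h n = m -> l' = [].
Proof.
  intros HL h l' -> E. exfalso. destruct (HL h (or_introl eq_refl)) as [_ [_ [_ H4]]].
  destruct (H4 n E); auto.
Qed.

Lemma no_fixed_point_at_target w : cyc_reduced w -> safe_letters w ->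
  ~ path ((n, m) :: p) w m m.
Proof.
  intros [Hc [HX Hcy]] HL Hp. destruct w as [|t w']; [destruct HX as [? []]|].
  simpl in Hp. destruct Hp as [b [Hs Hp]]. destruct t as [h|[|]].
  - (* the letter h sends m to a fresh point, where the next x-step is stuck *)
    simpl in Hs. subst b. destruct w' as [|t2 w''].
    + destruct HX as [bx [E|[]]]. discriminate.
    + simpl in Hc. destruct Hc as [Hc _]. destruct t2 as [|b2]; [contradiction|].
      destruct Hp as [x [Hs2 _]]. destruct (HL h (or_introl eq_refl)) as [H1 [H2 [H3 _]]].
      exact (stuck_at _ _ _ H1 H2 H3 Hs2).
  - destruct Hs as [E|Hs]; [injection E; intros; congruence|].
    apply Hm, occurs_dom. eexists; eauto.
  - (* the path first goes back from m to n along the new edge *)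
    destruct Hs as [E|Hs]; [|apply Hm, occurs_ran; eexists; eauto].
    injection E as <-.
    pose proof (safe_letters_cons _ _ HL) as HL'.
    destruct (new_edge_path w' n m (chain_tail _ _ Hc) HL' (not_eq_sym Hmn)
                (safe_no_preimage_n _ HL') Hp) as [Hp'|[l1 [l2 [E1 [H1 H2]]]]].
    + (* then it returns to m by a letter of G from a point known to p or n *)
      destruct w' as [|t2 w'']; [simpl in Hp'; congruence|].
      destruct (path_end_SG p _ _ _ (chain_tail _ _ Hc) Hp' ltac:(discriminate) Hm)
        as [h [l3 [y0 [E3 [H3 [H4 H5]]]]]].
      assert (Hh : safe_letter h) by (apply HL; right; rewrite E3; apply in_or_app; simpl; auto).
      destruct (proj2 (proj2 (proj2 Hh)) y0 (eq_sym H4)) as [Hy1 Hy2].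
      destruct H5 as [->|H5]; [simpl in H3; congruence|contradiction].
    + (* or it uses the new edge again, contradicting reducedness or safety *)
      destruct H2 as [[-> _]|[h [-> E2]]].
      * pose proof (cyc_closed_last (SX false) w' (SX false :: l1) (SX true)
                      ltac:(rewrite E1; reflexivity) Hcy) as Ha. discriminate.
      * assert (Hh : safe_letter h) by (apply HL; right; rewrite E1; apply in_or_app; simpl; auto).
        destruct Hh as [_ [_ [Hhm _]]]. congruence.
Qed.

Lemma no_fixed_point_entering_target h w a : cyc_reduced (SG h :: w) ->
  safe_letters (SG h :: w) -> h a = m -> ~ path ((n, m) :: p) (SG h :: w) a a.
Proof.
  intros [Hc [HX Hcy]] HL E Hp. simpl in Hp. destruct Hp as [b [-> Hp]]. rewrite E in Hp.
  destruct w as [|t2 w']; [destruct HX as [bx [E'|[]]]; discriminate|].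
  simpl in Hc. destruct Hc as [Hc1 Hc2]. destruct t2 as [|b2]; [contradiction|].
  destruct Hp as [x [Hs Hp]].
  destruct (HL h (or_introl eq_refl)) as [_ [_ [Hhm Hpre]]].
  destruct (Hpre a E) as [HaD Han].
  destruct b2; simpl in Hs; destruct Hs as [E2|Hs].
  - injection E2; intros; congruence.
  - apply Hm, occurs_dom. eexists; eauto.
  -
    injection E2 as <-.
    assert (HL' : safe_letters w') by (intros h' Hi; apply HL; simpl; auto).
    destruct (new_edge_path w' n a (chain_tail _ _ Hc2) HL' (not_eq_sym Hmn)
                (safe_no_preimage_n _ HL') Hp) as [Hp'|[l1 [l2 [E1 [H1 H2]]]]].
    + destruct w' as [|t3 w3]; [simpl in Hp'; congruence|].
      destruct (path_end_SG p _ _ _ (proj2 Hc2) Hp' ltac:(discriminate) HaD)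
        as [h' [l3 [y0 [E3 _]]]].
      apply (cyc_closed_last (SG h) (SX false :: t3 :: w3) (SG h :: SX false :: l3) (SG h')).
      * rewrite E3. reflexivity.
      * exact Hcy.
    + destruct H2 as [[-> ->]|[h' [-> E2']]]; [congruence|].
      apply (cyc_closed_last (SG h) (SX false :: w') (SG h :: SX false :: l1 ++ [SX true]) (SG h')).
      * rewrite E1. simpl. rewrite <- app_assoc. reflexivity.
      * exact Hcy.
  - apply Hm, occurs_ran. eexists; eauto.
Qed.

Lemma no_new_fixed_point w a : cyc_reduced w -> safe_letters w ->
  path ((n, m) :: p) w a a -> path p w a a.
Proof.
  intros Hw HL Hp. pose proof Hw as [Hc [_ Hcy]].
  destruct w as [|t w']; [simpl; auto|].
  destruct (Nat.eq_dec a m) as [->|Nam];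
    [exfalso; exact (no_fixed_point_at_target _ Hw HL Hp)|].
  assert (Hinv : forall h0 l', t :: w' = SG h0 :: l' -> h0 a = m -> l' = []).
  { intros h0 l' [= -> <-] E. exfalso. exact (no_fixed_point_entering_target _ _ _ Hw HL E Hp). }
  destruct (new_edge_path (t :: w') a a Hc HL Nam Hinv Hp) as [H|[l1 [l2 [E1 [H1 H2]]]]]; auto.
  exfalso. destruct H2 as [[_ ->]|[h' [-> E2]]]; [congruence|].
  (* the path ends with a letter h' after the new edge: a = h' m is fresh *)
  destruct t as [h|b0].
  - apply (cyc_closed_last _ _ (l1 ++ [SX true]) (SG h') ltac:(rewrite E1, <- app_assoc; reflexivity) Hcy).
  - destruct (HL h') as [Hd [Hn' [Hmm _]]]; [rewrite E1; apply in_or_app; simpl; auto|].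
    simpl in Hp. destruct Hp as [x [Hs _]]. rewrite E2 in Hs. exact (stuck_at _ _ _ Hd Hn' Hmm Hs).
Qed.
End SafeEdge.

(* Reversing all edges exchanges x and x⁻¹; it reduces the case of an edge
   m ↦ a (a new preimage) to the case a ↦ m treated above. *)
Definition flip (p : list (nat * nat)) : list (nat * nat) := map (fun '(x, y) => (y, x)) p.
Definition flip_sym (t : sym) : sym := match t with SG h => SG h | SX b => SX (negb b) end.
Definition flip_word (w : list sym) : list sym := map flip_sym w.

Lemma in_flip p x y : In (x, y) (flip p) <-> In (y, x) p.
Proof.
  unfold flip. rewrite in_map_iff. split.
  - intros [[u v] [[= <- <-] H]]. auto.
  - intros H. exists (y, x); auto.
Qed.

Lemma occurs_flip p x : occurs (flip p) x <-> occurs p x.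
Proof.
  split; intros H; apply occurs_inv in H; destruct H as [[b H]|[b H]];
    rewrite ?in_flip in H; solve [apply occurs_dom; exists b; rewrite ?in_flip; auto
                               | apply occurs_ran; exists b; rewrite ?in_flip; auto].
Qed.

Lemma path_flip p w a c : path (flip p) (flip_word w) a c <-> path p w a c.
Proof.
  revert a; induction w as [|t w IH]; intros a; simpl; [tauto|].
  split; intros [b [Hs Hp]]; exists b; split; try (apply IH; auto);
    destruct t as [h|[|]]; cbn [step flip_sym negb] in *; auto; apply in_flip; auto.
Qed.

Lemma compatible_flip t t' : compatible (flip_sym t) (flip_sym t') <-> compatible t t'.
Proof. destruct t, t'; simpl; try tauto. destruct b, b0; simpl; split; congruence. Qed.

Lemma chain_flip w : chain (flip_word w) <-> chain w.
Proof.
  induction w as [|t w IH]; simpl; [tauto|]. destruct w as [|t' w]; simpl; [tauto|].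
  simpl in IH. rewrite compatible_flip. tauto.
Qed.

Lemma cyc_reduced_flip w : cyc_reduced w -> cyc_reduced (flip_word w).
Proof.
  intros [Hc [[b Hb] Hcy]]. split; [apply chain_flip; auto|split].
  - exists (negb b). exact (in_map flip_sym _ (SX b) Hb).
  - destruct w as [|t w]; simpl; auto.
    change (compatible (last (map flip_sym (t :: w)) (flip_sym t)) (flip_sym t)).
    assert (Hl : forall l d, last (map flip_sym l) (flip_sym d) = flip_sym (last l d)).
    { induction l as [|x l IH]; simpl; auto. destruct l; simpl in *; auto. }
    rewrite Hl. apply compatible_flip. exact Hcy.
Qed.

Lemma in_flip_word h w : In (SG h) (flip_word w) -> In (SG h) w.
Proof.
  unfold flip_word. rewrite in_map_iff. intros [t [E H]].
  destruct t; simpl in E; inversion E; subst; auto.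
Qed.

Lemma safe_letter_flip p n m h : safe_letter p n m h -> safe_letter (flip p) n m h.
Proof.
  unfold safe_letter. intros [H1 [H2 [H3 H4]]].
  split; [rewrite occurs_flip; auto|]. do 2 (split; auto).
  intros b E. rewrite occurs_flip. auto.
Qed.

(** * Safe extensions *)

Definition edge (b : bool) (a m : nat) : nat * nat := if b then (a, m) else (m, a).

Definition free (b : bool) (a : nat) (p : list (nat * nat)) : Prop :=
  if b then ~ dom p a else ~ ran p a.

Definition safe_target (P : list sym -> Prop) (p : list (nat * nat)) (W : list (list sym))
    (a m : nat) : Prop :=
  ~ occurs p m /\ m <> a /\ forall w, In w W -> P w -> safe_letters p a m w.

Lemma occurs_edge b a m p x : occurs (edge b a m :: p) x <-> x = a \/ x = m \/ occurs p x.
Proof. destruct b; simpl; rewrite occurs_cons; simpl; tauto. Qed.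

Lemma step_edge b a m p : step (edge b a m :: p) (SX b) a m.
Proof. destruct b; simpl; auto. Qed.

Section SafeExtension.
Variable P : list sym -> Prop.
Hypothesis HP : forall w, P w -> cyc_reduced w.

Lemma safe_edge p W b a m : safe_target P p W a m ->
  forall w, In w W -> P w -> forall x, path (edge b a m :: p) w x x -> path p w x x.
Proof.
  intros [Hm [Hma HL]] w Hw Pw x Hp. destruct b; simpl in Hp.
  - exact (no_new_fixed_point p a m Hm Hma w x (HP w Pw) (HL w Hw Pw) Hp).
  - apply path_flip. apply path_flip in Hp.
    apply (no_new_fixed_point (flip p) a m); [rewrite occurs_flip; auto|auto|..].
    + apply cyc_reduced_flip, HP; auto.
    + intros h Hi. apply safe_letter_flip, (HL w Hw Pw h), in_flip_word; auto.
    + exact Hp.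
Qed.

Inductive safe_ext (W : list (list sym)) (p : list (nat * nat)) : list (nat * nat) -> Prop :=
| safe_ext_refl : safe_ext W p p
| safe_ext_edge q b a m : safe_ext W p q -> free b a q -> safe_target P q W a m ->
    safe_ext W p (edge b a m :: q).

Lemma safe_ext_incl W p q : safe_ext W p q -> incl p q.
Proof. induction 1; [apply incl_refl|apply incl_tl; auto]. Qed.

Lemma safe_ext_trans W p q r : safe_ext W p q -> safe_ext W q r -> safe_ext W p r.
Proof. intros H1 H2. induction H2; auto. econstructor; eauto. Qed.

Lemma safe_ext_one W p b a m : free b a p -> safe_target P p W a m ->
  safe_ext W p (edge b a m :: p).
Proof. intros. econstructor; [constructor|auto|auto]. Qed.

Lemma safe_ext_fixed W p q : safe_ext W p q ->
  forall w, In w W -> P w -> forall x, path q w x x -> path p w x x.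
Proof.
  induction 1 as [|q b a m H IH Hf Hc]; auto.
  intros w Hw Pw x Hp. apply IH; auto. eapply safe_edge; eauto.
Qed.

Definition partial_inj (p : list (nat * nat)) : Prop :=
  (forall a b c, In (a, b) p -> In (a, c) p -> b = c) /\
  (forall a b c, In (a, c) p -> In (b, c) p -> a = b).

Lemma safe_ext_partial_inj W p q : safe_ext W p q -> partial_inj p -> partial_inj q.
Proof.
  induction 1 as [|q b a m H IH Hf Hc]; auto. intros Hp. specialize (IH Hp).
  destruct IH as [I1 I2]. destruct Hc as [Hm _].
  (* the new edge is the only one at its endpoints a (free) and m (fresh) *)
  assert (Hm1 : forall y, ~ In (m, y) q) by (intros y Hy; apply Hm, occurs_dom; eexists; eauto).
  assert (Hm2 : forall y, ~ In (y, m) q) by (intros y Hy; apply Hm, occurs_ran; eexists; eauto).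
  destruct b; simpl in *; split; intros x y z H1 H2; simpl in H1, H2;
    destruct H1 as [E1|H1]; destruct H2 as [E2|H2]; eauto;
    try (injection E1; injection E2; congruence).
  - injection E1 as -> ->. exfalso; apply Hf; eexists; eauto.
  - injection E2 as -> ->. exfalso; apply Hf; eexists; eauto.
  - injection E1 as -> ->. exfalso; eapply Hm2; eauto.
  - injection E2 as -> ->. exfalso; eapply Hm2; eauto.
  - injection E1 as -> ->. exfalso; eapply Hm1; eauto.
  - injection E2 as -> ->. exfalso; eapply Hm1; eauto.
  - injection E1 as -> ->. exfalso; apply Hf; eexists; eauto.
  - injection E2 as -> ->. exfalso; apply Hf; eexists; eauto.
Qed.
End SafeExtension.

Definition eventually (P : nat -> Prop) : Prop := exists B, forall m, B <= m -> P m.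

Definition inj (h : nat -> nat) : Prop := forall x y, h x = h y -> x = y.
Definition fin_fixed (h : nat -> nat) : Prop := exists N, forall n, h n = n -> n < N.
(* The letters of G that occur in reduced words: injective, finitely many
   fixed points (G is cofinitary). *)
Definition good_letter (h : nat -> nat) : Prop := inj h /\ fin_fixed h.

Lemma eventually_and P Q : eventually P -> eventually Q -> eventually (fun m => P m /\ Q m).
Proof. intros [B1 H1] [B2 H2]. exists (B1 + B2). intros m Hm. split; [apply H1|apply H2]; lia. Qed.

Lemma eventually_mono (P Q : nat -> Prop) : (forall m, P m -> Q m) -> eventually P -> eventually Q.
Proof. intros H [B HB]. exists B; auto. Qed.

Lemma eventually_impl (Q : Prop) P : (Q -> eventually P) -> eventually (fun m => Q -> P m).
Proof.
  intros H. destruct (classic Q) as [q|nq].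
  - destruct (H q) as [B HB]. exists B; auto.
  - exists 0. intros; contradiction.
Qed.

Lemma eventually_all {A} (L : list A) (P : A -> nat -> Prop) :
  (forall x, In x L -> eventually (P x)) -> eventually (fun m => forall x, In x L -> P x m).
Proof.
  induction L as [|a L IH]; intros H; [exists 0; intros m _ x []|].
  destruct (H a (or_introl eq_refl)) as [B1 H1].
  destruct IH as [B2 H2]; [intros x Hx; apply H; simpl; auto|].
  exists (B1 + B2). intros m Hm x [<-|Hx]; [apply H1; lia|apply H2; auto; lia].
Qed.

Lemma eventually_neq_inj (f : nat -> nat) y : inj f -> eventually (fun m => f m <> y).
Proof.
  intros Hf. destruct (classic (exists m, f m = y)) as [[m0 E]|N].
  - exists (S m0). intros m Hm E'. assert (m = m0) by (apply Hf; congruence). lia.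
  - exists 0. intros m _ E. apply N; eauto.
Qed.

Lemma eventually_notin_inj (f : nat -> nat) L : inj f -> eventually (fun m => ~ In (f m) L).
Proof.
  intros Hf. induction L as [|y L IH]; [exists 0; auto|].
  destruct IH as [B1 H1]. destruct (eventually_neq_inj f y Hf) as [B2 H2].
  exists (B1 + B2). intros m Hm [E|Hi]; [apply (H2 m); [lia|auto]|apply (H1 m); [lia|auto]].
Qed.

Lemma eventually_notin L : eventually (fun m => ~ In m L).
Proof. apply (eventually_notin_inj (fun x => x)); intros x y; auto. Qed.

Lemma eventually_not_fixed (f : nat -> nat) : fin_fixed f -> eventually (fun m => f m <> m).
Proof. intros [N H]. exists N. intros m Hm E. specialize (H m E). lia. Qed.

Lemma fin_fixed_conj (F f u : nat -> nat) : inj u -> fin_fixed f ->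
  (forall a, F a = a -> f (u a) = u a) -> fin_fixed F.
Proof.
  intros Hu [N HN] H. destruct (eventually_notin_inj u (seq 0 N) Hu) as [B HB].
  exists B. intros a Ha. destruct (Nat.lt_ge_cases a B) as [Hlt|Hge]; auto. exfalso.
  apply (HB a Hge). apply in_seq. specialize (HN _ (H a Ha)). lia.
Qed.

(** * Choice of the coding gaps *)

Lemma parity_unbounded (k kinv : nat -> nat) (Hk : forall y, k (kinv y) = y) b B :
  exists m, B <= m /\ Nat.odd (k m) = b.
Proof.
  set (Y := map (fun t => 2 * t + (if b then 1 else 0)) (seq 0 (S B))).
  set (M := map kinv Y).
  assert (HNY : NoDup Y).
  { apply FinFun.Injective_map_NoDup; [intros x y E; destruct b; lia|apply seq_NoDup]. }
  assert (HM : NoDup M).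
  { apply FinFun.Injective_map_NoDup; auto.
    intros x y E. rewrite <- (Hk x), <- (Hk y). congruence. }
  destruct (classic (exists m, In m M /\ B <= m)) as [[m [Hm HB]]|N].
  - exists m. split; auto. apply in_map_iff in Hm. destruct Hm as [y [<- Hy]].
    rewrite Hk. apply in_map_iff in Hy. destruct Hy as [t [<- _]].
    destruct b; [apply Nat.odd_odd|rewrite Nat.add_0_r; apply Nat.odd_even].
  - exfalso. assert (Hi : incl M (seq 0 B)).
    { intros m Hm. apply in_seq. split; [lia|].
      destruct (Nat.lt_ge_cases m B); auto. exfalso; apply N; eauto. }
    apply NoDup_incl_length in Hi; auto. unfold M, Y in Hi.
    rewrite !length_map, !length_seq in Hi. lia.
Qed.

Definition gap_ok (k h1 : nat -> nat) (b : bool) (d : nat) : Prop :=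
  forall B, exists m, B <= m /\ Nat.odd (k m) = b /\ k m + d <> m /\ h1 (k m + d) <> m.

(* One of the gaps 1, 2, 3 always works: otherwise for large m of the right
   parity two of the points k m + d would both equal h1⁻¹ m. *)
Lemma gap_exists (k kinv h1 : nat -> nat) (Hk : forall y, k (kinv y) = y)
  (Hh : inj h1) b : exists d, gap_ok k h1 b d.
Proof.
  apply NNPP. intros N.
  assert (Hd : forall d, exists B, forall m, B <= m -> Nat.odd (k m) = b ->
                 k m + d = m \/ h1 (k m + d) = m).
  { intros d. apply NNPP. intros N2. apply N. exists d. intros B.
    apply NNPP. intros N3. apply N2. exists B. intros m Hm Ho.
    destruct (Nat.eq_dec (k m + d) m) as [E|E]; auto.
    destruct (Nat.eq_dec (h1 (k m + d)) m) as [E'|E']; auto.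
    exfalso. apply N3. exists m. auto. }
  destruct (Hd 1) as [B1 H1]. destruct (Hd 2) as [B2 H2]. destruct (Hd 3) as [B3 H3].
  destruct (parity_unbounded k kinv Hk b (B1 + B2 + B3)) as [m [Hm Ho]].
  specialize (H1 m ltac:(lia) Ho). specialize (H2 m ltac:(lia) Ho). specialize (H3 m ltac:(lia) Ho).
  destruct H1 as [E1|E1]; destruct H2 as [E2|E2]; destruct H3 as [E3|E3]; try lia;
  match goal with
  | A : h1 ?x = m, B : h1 ?y = m |- _ => assert (x = y) by (apply Hh; congruence); lia
  end.
Qed.

Definition last_fn (w : list sym) : nat -> nat :=
  match last w (SX true) with SG h => h | SX _ => fun x => x end.

Lemma free_after b a m p : ~ occurs p m -> m <> a -> free b m (edge b a m :: p).
Proof.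
  intros H1 H2. destruct b; simpl; intros [y [E|Hy]];
    try (injection E; intros; congruence);
    [apply H1, occurs_dom | apply H1, occurs_ran]; exists y; auto.
Qed.

Lemma free_fresh b x p : ~ occurs p x -> free b x p.
Proof.
  intros H. destruct b; simpl; intros [y Hy]; apply H;
    [apply occurs_dom|apply occurs_ran]; exists y; auto.
Qed.

Section Realise.
Variable P : list sym -> Prop.
Variable W : list (list sym).
Hypothesis HW : forall w, In w W -> P w -> forall h, In (SG h) w -> good_letter h.

Lemma eventually_safe_letter p a h : good_letter h -> eventually (fun m => safe_letter p a m h).
Proof.
  intros [Hi Hf]. unfold safe_letter.
  apply (eventually_mono (fun m => (~ In (h m) (points p) /\ h m <> a) /\
                                   (h m <> m /\ ~ In m (map h (a :: points p))))).
  - intros m [[H1 H2] [H3 H4]]. do 3 (split; [assumption|]).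
    intros b E. split.
    + intro Hb. apply H4. rewrite <- E. apply in_map. right; auto.
    + intro Eb. apply H4. rewrite <- E, Eb. apply in_map. left; auto.
  - apply eventually_and; apply eventually_and.
    + apply eventually_notin_inj; auto.
    + apply eventually_neq_inj; auto.
    + apply eventually_not_fixed; auto.
    + apply eventually_notin.
Qed.

Lemma eventually_safe_target p a : eventually (fun m => safe_target P p W a m).
Proof.
  unfold safe_target. apply eventually_and; [apply eventually_notin|].
  apply eventually_and; [apply eventually_neq_inj; intros x y; auto|].
  apply (eventually_mono (fun m => forall w, In w W -> P w -> forall t, In t w ->
           match t with SG h => safe_letter p a m h | _ => True end)).
  - intros m H w Hw Pw h Hh. exact (H w Hw Pw (SG h) Hh).
  - apply eventually_all. intros w Hw. apply eventually_impl. intros Pw. apply eventually_all.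
    intros [h|b] Ht; [apply eventually_safe_letter; eapply HW; eauto|exists 0; auto].
Qed.

Variables (L : list nat) (bit : bool) (d : nat) (h1 : nat -> nat).
Hypothesis Hh1 : inj h1.

Definition next_fresh (q : list (nat * nat)) (v : nat) : Prop :=
  forall y, In y [v + d; h1 (v + d)] -> ~ occurs q y /\ ~ In y L.

Definition avoids_L (p q : list (nat * nat)) (a : nat) : Prop :=
  forall x, occurs q x -> occurs p x \/ x = a \/ ~ In x L.

Lemma avoids_L_trans p q r a a' : avoids_L p q a -> avoids_L q r a' -> ~ In a' L ->
  avoids_L p r a.
Proof.
  intros H1 H2 Ha x Hx. destruct (H2 x Hx) as [Y|[->|Y]]; auto.
Qed.

Lemma avoids_L_edge p b a m : ~ In m L -> avoids_L p (edge b a m :: p) a.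
Proof. intros Hm x Hx. apply occurs_edge in Hx. destruct Hx as [->|[->|Hx]]; auto. Qed.

Lemma realise_last_edge (k : nat -> nat) (Hk : inj k) b0 p a :
  free b0 a p -> gap_ok k h1 bit d ->
  exists m, safe_ext P W p (edge b0 a m :: p) /\ Nat.odd (k m) = bit /\
    next_fresh (edge b0 a m :: p) (k m) /\ avoids_L p (edge b0 a m :: p) a.
Proof.
  intros Hf HD.
  assert (I1 : inj (fun m => k m + d)) by (intros x y E; apply Hk; lia).
  assert (I2 : inj (fun m => h1 (k m + d))) by (intros x y E; apply Hh1 in E; apply Hk; lia).
  assert (Hev : eventually (fun m => safe_target P p W a m /\ ~ In m L /\
     (~ In (k m + d) (points p) /\ k m + d <> a /\ ~ In (k m + d) L) /\
     (~ In (h1 (k m + d)) (points p) /\ h1 (k m + d) <> a /\ ~ In (h1 (k m + d)) L))).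
  { apply eventually_and; [apply eventually_safe_target|].
    apply eventually_and; [apply eventually_notin|].
    repeat apply eventually_and;
      first [apply (eventually_notin_inj _ _ I1) | apply (eventually_neq_inj _ _ I1) |
             apply (eventually_notin_inj _ _ I2) | apply (eventually_neq_inj _ _ I2)]. }
  destruct Hev as [B HB]. destruct (HD B) as [m [Hm [Ho [Hd1 Hd2]]]].
  destruct (HB m Hm) as [HC [HmL [[A1 [A2 A3]] [B1 [B2 B3]]]]].
  exists m. split; [apply safe_ext_one; auto|]. split; [auto|]. split; [|apply avoids_L_edge; auto].
  intros y [<-|[<-|[]]]; rewrite occurs_edge; split; auto;
    intros [E|[E|E]]; solve [congruence | exact (A1 E) | exact (B1 E)].
Qed.

Lemma realise_step_X b0 p a : free b0 a p ->
  exists m, safe_ext P W p (edge b0 a m :: p) /\ free b0 m (edge b0 a m :: p) /\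
    ~ In m L /\ avoids_L p (edge b0 a m :: p) a.
Proof.
  intros Hf. destruct (eventually_and _ _ (eventually_safe_target p a) (eventually_notin L))
    as [B HB].
  destruct (HB B (le_n B)) as [[Hm [Hma HL]] HmL]. exists B.
  split; [apply safe_ext_one; [auto|split; auto]|].
  split; [apply free_after; auto|]. split; [auto|apply avoids_L_edge; auto].
Qed.

Lemma realise_step_G h b0 b1 p a : good_letter h -> free b0 a p ->
  exists m, safe_ext P W p (edge b0 a m :: p) /\ free b1 (h m) (edge b0 a m :: p) /\
    ~ In (h m) L /\ avoids_L p (edge b0 a m :: p) a.
Proof.
  intros [Hhi Hhf] Hf.
  assert (Hev : eventually (fun m => safe_target P p W a m /\ ~ In m L /\
     ~ In (h m) (points p) /\ h m <> a /\ h m <> m /\ ~ In (h m) L)).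
  { apply eventually_and; [apply eventually_safe_target|].
    apply eventually_and; [apply eventually_notin|].
    repeat apply eventually_and;
      first [apply eventually_notin_inj; auto | apply eventually_neq_inj; auto
            | apply eventually_not_fixed; auto]. }
  destruct Hev as [B HB]. destruct (HB B (le_n B)) as [HC [HmL [A1 [A2 [A3 A4]]]]].
  exists B. split; [apply safe_ext_one; auto|]. split; [|split; [auto|apply avoids_L_edge; auto]].
  apply free_fresh. rewrite occurs_edge. intros [E|[E|E]]; [congruence|congruence|exact (A1 E)].
Qed.

Lemma realise_word n : forall l b0 p a, length l <= n -> chain (SX b0 :: l) ->
  (forall h, In (SG h) l -> good_letter h) -> free b0 a p ->
  gap_ok (last_fn (SX b0 :: l)) h1 bit d ->
  exists q v, safe_ext P W p q /\ path q (SX b0 :: l) a v /\ Nat.odd v = bit /\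
    next_fresh q v /\ avoids_L p q a.
Proof.
  induction n as [|n IHn]; intros l b0 p a Hlen Hc Hl Hf HD.
  all: destruct l as [|t l].
  1, 3:
    destruct (realise_last_edge (fun x => x) ltac:(intros x y; auto) b0 p a Hf HD)
      as [m [He [Ho [Hn Ha]]]];
    exists (edge b0 a m :: p), m; split; [exact He|];
    split; [exists m; split; [apply step_edge|reflexivity]|auto].
  1: simpl in Hlen; lia.
  destruct t as [h|b1].
  - destruct l as [|t2 l].
    +
      destruct (realise_last_edge h (proj1 (Hl h (or_introl eq_refl))) b0 p a Hf HD)
        as [m [He [Ho [Hn Ha]]]].
      exists (edge b0 a m :: p), (h m). split; [exact He|]. split; [|auto].
      exists m. split; [apply step_edge|]. exists (h m). simpl; auto.
    +
      destruct t2 as [h'|b1]; [simpl in Hc; destruct Hc as [_ [[] _]]|].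
      destruct (realise_step_G h b0 b1 p a (Hl h (or_introl eq_refl)) Hf)
        as [m [He1 [Hf1 [HL1 Ha1]]]].
      destruct (IHn l b1 _ (h m) ltac:(simpl in Hlen; lia) (chain_tail _ _ (chain_tail _ _ Hc))
                  (fun h0 Hi => Hl h0 (or_intror (or_intror Hi))) Hf1 HD)
        as [q [v [He [Hp [Ho [Hn Ha]]]]]].
      exists q, v. split; [eapply safe_ext_trans; eauto|]. split; [|split; [|split]]; auto.
      * exists m. split; [eapply step_mono; [eapply safe_ext_incl; exact He|apply step_edge]|].
        exists (h m). split; [reflexivity|exact Hp].
      * eapply avoids_L_trans; eauto.
  -
    assert (b1 = b0) by (simpl in Hc; destruct Hc as [Hc _]; auto). subst b1.
    destruct (realise_step_X b0 p a Hf) as [m [He1 [Hf1 [HL1 Ha1]]]].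
    destruct (IHn l b0 _ m ltac:(simpl in Hlen; lia) (chain_tail _ _ Hc)
                (fun h0 Hi => Hl h0 (or_intror Hi)) Hf1 HD)
      as [q [v [He [Hp [Ho [Hn Ha]]]]]].
    exists q, v. split; [eapply safe_ext_trans; eauto|]. split; [|split; [|split]]; auto.
    + exists m. split; [eapply step_mono; [eapply safe_ext_incl; exact He|apply step_edge]|exact Hp].
    + eapply avoids_L_trans; eauto.
Qed.
End Realise.

(** * Evaluating words, normal forms *)

Definition letter_fn (g ginv : nat -> nat) (t : sym) : nat -> nat :=
  match t with SG h => h | SX true => g | SX false => ginv end.

(* The permutation given by a word, its first letter applied first. *)
Fixpoint run (g ginv : nat -> nat) (l : list sym) (a : nat) : nat :=
  match l with [] => a | t :: l' => run g ginv l' (letter_fn g ginv t a) end.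

Lemma run_app g ginv l1 l2 a : run g ginv (l1 ++ l2) a = run g ginv l2 (run g ginv l1 a).
Proof. revert a; induction l1; simpl; auto. Qed.

Definition nontrivial (h : nat -> nat) : Prop := exists n, h n <> n.

Definition sym_ok (G : (nat -> nat) -> Prop) (t : sym) : Prop :=
  match t with SG h => G h /\ nontrivial h | SX _ => True end.
Definition sym_in (G : (nat -> nat) -> Prop) (t : sym) : Prop :=
  match t with SG h => G h | SX _ => True end.

Definition reduced (G : (nat -> nat) -> Prop) (l : list sym) : Prop :=
  Forall (sym_ok G) l /\ chain l.

Lemma trivial_id (h : nat -> nat) a : ~ nontrivial h -> h a = a.
Proof. intros H. apply NNPP. intros E. apply H. exists a; auto. Qed.

Lemma reduced_sym_in G l : reduced G l -> Forall (sym_in G) l.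
Proof. intros [H _]. eapply Forall_impl; [|exact H]. intros [|]; simpl; tauto. Qed.

Lemma reduced_tail G t l : reduced G (t :: l) -> reduced G l.
Proof. intros [H1 H2]. inversion H1; subst. split; auto. eapply chain_tail; eauto. Qed.

Lemma reduced_no_X G l : reduced G l -> ~ hasX l ->
  l = [] \/ exists h, l = [SG h] /\ G h /\ nontrivial h.
Proof.
  intros [H1 H2] HX. destruct l as [|t l]; auto. right.
  destruct t as [h|b]; [|exfalso; apply HX; exists b; simpl; auto].
  destruct l as [|t2 l]; [inversion H1; subst; exists h; simpl in *; auto|].
  destruct t2 as [h2|b2]; [simpl in H2; tauto|exfalso; apply HX; exists b2; simpl; auto].
Qed.

Section NormalForm.
Variable G : (nat -> nat) -> Prop.
Hypothesis HGsub : IsSubgroup G.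
Variables g ginv : nat -> nat.
Hypothesis Hg1 : forall n, g (ginv n) = n.
Hypothesis Hg2 : forall n, ginv (g n) = n.

Lemma G_inj h : G h -> inj h.
Proof.
  intros Gh x y E. destruct HGsub as [Hb _]. destruct (Hb h Gh) as [hi [_ H2]].
  rewrite <- (H2 x), <- (H2 y). congruence.
Qed.

Lemma cons_reduce_G h l : G h -> reduced G l ->
  exists l', reduced G l' /\ forall a, run g ginv l' a = run g ginv (SG h :: l) a.
Proof.
  intros Gh Hl. destruct (classic (nontrivial h)) as [Hn|Hn].
  2:{ exists l. split; auto. intros a. simpl. rewrite (trivial_id h a Hn). reflexivity. }
  destruct l as [|[h2|b2] l].
  - exists [SG h]. split; [split; [constructor; [simpl; auto|constructor]|simpl; auto]|auto].
  -
    destruct Hl as [Hl1 Hl2]. inversion Hl1 as [|? ? Hh2 Hl1']; subst. destruct Hh2 as [Gh2 _].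
    destruct HGsub as [_ [_ [Hcomp _]]].
    destruct (classic (nontrivial (fun n => h2 (h n)))) as [Hk|Hk].
    + exists (SG (fun n => h2 (h n)) :: l). split; [|reflexivity].
      split; [constructor; simpl; auto|destruct l; simpl in *; auto].
    + exists l. split; [split; [auto|eapply chain_tail; eauto]|].
      intros a. simpl. rewrite (trivial_id _ a Hk). reflexivity.
  - exists (SG h :: SX b2 :: l). destruct Hl as [Hl1 Hl2].
    split; [split; [constructor; simpl; auto|simpl in *; auto]|reflexivity].
Qed.

Lemma cons_reduce_X b l : reduced G l ->
  exists l', reduced G l' /\ forall a, run g ginv l' a = run g ginv (SX b :: l) a.
Proof.
  intros Hl. destruct l as [|[h2|b2] l].
  - exists [SX b]. split; [split; [constructor; [simpl; auto|constructor]|simpl; auto]|auto].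
  - exists (SX b :: SG h2 :: l). destruct Hl as [Hl1 Hl2].
    split; [split; [constructor; simpl; auto|simpl in *; auto]|reflexivity].
  - destruct (Bool.bool_dec b b2) as [<-|Hb].
    + exists (SX b :: SX b :: l). destruct Hl as [Hl1 Hl2].
      split; [split; [constructor; simpl; auto|simpl in *; auto]|reflexivity].
    +
      exists l. split; [eapply reduced_tail; eauto|].
      intros a. simpl. destruct b, b2; try congruence; simpl; rewrite ?Hg1, ?Hg2; auto.
Qed.

Lemma reduce l : Forall (sym_in G) l ->
  exists l', reduced G l' /\ forall a, run g ginv l' a = run g ginv l a.
Proof.
  induction l as [|t l IH]; intros H; [exists []; split; [split; simpl; auto|auto]|].
  inversion H; subst. destruct (IH H3) as [l1 [R1 E1]].
  assert (Ht : exists l2, reduced G l2 /\ forall a, run g ginv l2 a = run g ginv (t :: l1) a).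
  { destruct t as [h|b]; [apply cons_reduce_G; auto|apply cons_reduce_X; auto]. }
  destruct Ht as [l2 [R2 E2]]. exists l2. split; auto.
  intros a. rewrite E2. simpl. auto.
Qed.

Lemma inverse_word l : Forall (sym_in G) l -> exists l', Forall (sym_in G) l' /\
  forall a, run g ginv l' (run g ginv l a) = a /\ run g ginv l (run g ginv l' a) = a.
Proof.
  induction l as [|t l IH]; intros H; [exists []; simpl; auto|].
  inversion H; subst. destruct (IH H3) as [l1 [F1 E1]].
  assert (Ht : exists t', sym_in G t' /\ forall a, letter_fn g ginv t' (letter_fn g ginv t a) = a /\
                                                letter_fn g ginv t (letter_fn g ginv t' a) = a).
  { destruct t as [h|b].
    - destruct HGsub as [Hb [_ [_ Hi]]]. destruct (Hb h H2) as [hi [E1' E2']].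
      exists (SG hi). simpl. split; [apply (Hi h hi); auto|auto].
    - exists (SX (negb b)). destruct b; simpl; auto. }
  destruct Ht as [t' [Ht1 Ht2]].
  exists (l1 ++ [t']). split; [apply Forall_app; auto|].
  intros a. rewrite !run_app. simpl. split.
  - rewrite (proj1 (E1 _)). apply Ht2.
  - rewrite (proj2 (Ht2 _)). apply E1.
Qed.

Lemma genWith_reduced f : genWith G g f -> exists l, reduced G l /\ forall a, f a = run g ginv l a.
Proof.
  induction 1 as [f [Hf|Hf]| |f h _ [l1 [R1 E1]] _ [l2 [R2 E2]]|f h _ [l1 [R1 E1]] Hfh Hhf].
  - destruct (reduce [SG f] ltac:(constructor; simpl; auto)) as [l [R E]].
    exists l. split; [exact R|intros a; rewrite E; reflexivity].
  - subst. exists [SX true]. split; [split; [constructor; [simpl; auto|constructor]|simpl; auto]|auto].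
  - exists []. split; [split; simpl; auto|auto].
  - destruct (reduce (l2 ++ l1)) as [l [R E]].
    { apply Forall_app. split; apply reduced_sym_in; auto. }
    exists l. split; auto. intros a. rewrite E, run_app, E2, E1. reflexivity.
  - destruct (inverse_word l1 (reduced_sym_in _ _ R1)) as [l' [F' E']].
    destruct (reduce l' F') as [l [R E]]. exists l. split; auto. intros a. rewrite E.
    assert (Hinj : inj f) by (intros x y Hxy; rewrite <- (Hhf x), <- (Hhf y); congruence).
    apply Hinj. rewrite Hfh, E1. symmetry. apply E'.
Qed.
End NormalForm.

(** * From cyclically reduced words to all words *)

Section CyclicReduction.
Variable G : (nat -> nat) -> Prop.
Hypothesis HGsub : IsSubgroup G.
Hypothesis HGcof : Cofinitary G.
Variables g ginv : nat -> nat.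
Hypothesis Hg1 : forall n, g (ginv n) = n.
Hypothesis Hg2 : forall n, ginv (g n) = n.

(* A reduced word l with x that is not cyclically reduced has a shorter
   reduced conjugate l' = u l u⁻¹, so u maps fixed points of l to fixed
   points of l'. *)
Definition shorter_conjugate (l : list sym) : Prop :=
  exists u l', inj u /\ reduced G l' /\ l' <> [] /\ length l' < length l /\
    forall a, run g ginv l a = a -> run g ginv l' (u a) = u a.

(* Case h ... h': conjugate by h, merging h' h into one letter. *)
Lemma shorter_conjugate_G h l0 h' : reduced G (SG h :: l0 ++ [SG h']) ->
  shorter_conjugate (SG h :: l0 ++ [SG h']).
Proof.
  intros [HF HC].
  assert (Gh : G h) by (inversion HF; subst; apply H1).
  assert (Gh' : G h').
  { apply Forall_inv_tail, Forall_app in HF. destruct HF as [_ HF]. inversion HF; subst. apply H1. }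
  assert (HF0 : Forall (sym_ok G) l0) by (inversion HF; subst; apply Forall_app in H2; tauto).
  assert (HC0 : chain l0) by (apply chain_tail in HC; eapply chain_app_l; eauto).
  destruct l0 as [|t0 l0']; [simpl in HC; tauto|].
  assert (HS : exists b, last (t0 :: l0') (SX true) = SX b).
  { destruct (exists_last (l := t0 :: l0') ltac:(discriminate)) as [l3 [t3 E3]].
    rewrite E3, last_last. destruct t3 as [h3|b3]; eauto.
    exfalso. apply chain_tail in HC. rewrite E3, <- app_assoc in HC. exact (chain_mid _ _ _ _ HC). }
  set (k := fun n => h (h' n)).
  assert (Hfix : forall a, run g ginv (SG h :: (t0 :: l0') ++ [SG h']) a = a ->
            k (run g ginv (t0 :: l0') (h a)) = h a).
  { intros a Ha. simpl in Ha |- *. rewrite run_app in Ha. simpl in Ha. unfold k. congruence. }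
  exists h. destruct (classic (nontrivial k)) as [Hk|Hk].
  - exists ((t0 :: l0') ++ [SG k]). split; [apply (G_inj G HGsub); auto|]. split; [|split; [|split]].
    + assert (Gk : G k) by (destruct HGsub as [_ [_ [Hcomp _]]]; unfold k; apply Hcomp; auto).
      split.
      * apply Forall_app. split; [auto|]. constructor; [split; auto|constructor].
      * apply (chain_snoc (t0 :: l0') (SG k)); auto. right. destruct HS as [b Hb].
        rewrite (last_def _ _ _ (SX true)), Hb. simpl; auto.
    + destruct l0'; discriminate.
    + simpl. rewrite !length_app. simpl. lia.
    + intros a Ha. rewrite run_app. simpl. exact (Hfix a Ha).
  - exists (t0 :: l0'). split; [apply (G_inj G HGsub); auto|]. split; [split; auto|].
    split; [discriminate|]. split; [simpl; rewrite length_app; simpl; lia|].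
    intros a Ha. rewrite <- (Hfix a Ha) at 2. symmetry. apply trivial_id; auto.
Qed.

(* Case x^±1 ... x^∓1: conjugate by the first letter, deleting both. *)
Lemma shorter_conjugate_X b l0 b' : b <> b' -> reduced G (SX b :: l0 ++ [SX b']) ->
  shorter_conjugate (SX b :: l0 ++ [SX b']).
Proof.
  intros Hbb [HF HC]. exists (letter_fn g ginv (SX b)), l0.
  split; [|split; [|split; [|split]]].
  - intros x y E. destruct b; simpl in E.
    + rewrite <- (Hg2 x), <- (Hg2 y). congruence.
    + rewrite <- (Hg1 x), <- (Hg1 y). congruence.
  - split; [inversion HF; subst; apply Forall_app in H2; tauto|].
    apply chain_tail in HC. eapply chain_app_l; eauto.
  - intros ->. simpl in HC. destruct HC as [HC _]. exact (Hbb HC).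
  - simpl. rewrite length_app. simpl. lia.
  - intros a Ha. simpl in Ha. rewrite run_app in Ha. simpl in Ha.
    destruct b, b'; try congruence; simpl in *; rewrite <- Ha at 2; rewrite ?Hg1, ?Hg2; auto.
Qed.

Lemma shorter_conjugate_exists l : reduced G l -> hasX l -> ~ cyc_closed l ->
  shorter_conjugate l.
Proof.
  intros HR HX Hcy. destruct l as [|t l1]; [simpl in Hcy; tauto|].
  destruct l1 as [|t1 l1'].
  { exfalso. apply Hcy. destruct t as [h|b]; simpl; auto. destruct HX as [b [E|[]]]; discriminate. }
  destruct (exists_last (l := t1 :: l1') ltac:(discriminate)) as [l0 [t' E]]. rewrite E in *.
  unfold cyc_closed in Hcy.
  change (compatible (last ((t :: l0) ++ [t']) t) t -> False) in Hcy.
  rewrite last_last in Hcy.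
  destruct t as [h|b]; destruct t' as [h'|b']; simpl in Hcy; try tauto.
  - apply shorter_conjugate_G; auto.
  - apply shorter_conjugate_X; auto.
Qed.

Hypothesis Hcyc : forall l, reduced G l -> cyc_reduced l -> fin_fixed (run g ginv l).

Lemma reduced_fin_fixed n : forall l, length l <= n -> reduced G l -> l <> [] ->
  fin_fixed (run g ginv l).
Proof.
  induction n as [|n IH]; intros l Hlen HR Hne.
  { destruct l; simpl in Hlen; [contradiction|lia]. }
  destruct (classic (hasX l)) as [HX|HX].
  - destruct (classic (cyc_closed l)) as [Hcy|Hcy].
    + apply Hcyc; [auto|split; [apply HR|auto]].
    + destruct (shorter_conjugate_exists l HR HX Hcy) as [u [l' [Hu [HR' [Hne' [Hlen' Hfix]]]]]].
      apply (fin_fixed_conj _ (run g ginv l') u Hu); [apply IH; auto; lia|exact Hfix].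
  - destruct (reduced_no_X G l HR HX) as [->|[h [-> [Gh Hh]]]]; [contradiction|].
    exact (HGcof h Gh Hh).
Qed.
End CyclicReduction.

Fixpoint decode_tuple (len c : nat) : list nat :=
  match len with 0 => [] | S k => let (a, b) := Cantor.of_nat c in a :: decode_tuple k b end.
Fixpoint encode_tuple (l : list nat) : nat :=
  match l with [] => 0 | a :: l' => Cantor.to_nat (a, encode_tuple l') end.

Definition decode_list (i : nat) : list nat := let (len, c) := Cantor.of_nat i in decode_tuple len c.

Lemma decode_encode_tuple l : decode_tuple (length l) (encode_tuple l) = l.
Proof.
  induction l as [|a l IH]; [reflexivity|]. cbn [length encode_tuple decode_tuple].
  rewrite Cantor.cancel_of_to. congruence.
Qed.

Lemma decode_list_surj l : exists i, decode_list i = l.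
Proof.
  exists (Cantor.to_nat (length l, encode_tuple l)). unfold decode_list.
  rewrite Cantor.cancel_of_to. apply decode_encode_tuple.
Qed.

Definition decode_sym (e : nat -> (nat -> nat)) (k : nat) : sym :=
  match k with 0 => SX true | 1 => SX false | S (S k') => SG (e k') end.
Definition decode_word (e : nat -> (nat -> nat)) (i : nat) : list sym :=
  map (decode_sym e) (decode_list i).

Lemma decode_word_surj (G : (nat -> nat) -> Prop) e (He : forall f, G f -> exists k, e k = f) l :
  Forall (sym_in G) l -> exists i, decode_word e i = l.
Proof.
  intros H. assert (Hc : exists cs, map (decode_sym e) cs = l).
  { induction l as [|t l IH]; [exists []; auto|]. inversion H; subst.
    destruct (IH H3) as [cs E]. destruct t as [h|[|]].
    - destruct (He h H2) as [k Ek]. exists (S (S k) :: cs). simpl. congruence.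
    - exists (0 :: cs). simpl; congruence.
    - exists (1 :: cs). simpl; congruence. }
  destruct Hc as [cs E]. destruct (decode_list_surj cs) as [i Ei]. exists i.
  unfold decode_word. congruence.
Qed.

(** * The construction *)

(* The map applied by the first letter of a word if it is in G.  Otherwise
   S is used: the start point R of a word beginning with x^±1 only has to be
   kept fresh itself, and S R is a harmless extra constraint. *)
Definition first_fn (w : list sym) : nat -> nat := match w with SG h :: _ => h | _ => S end.

(* The points that must be kept fresh for the word w to be run from R. *)
Definition start_points (w : list sym) (R : nat) : list nat :=
  match w with SG h :: _ => [R; h R] | _ => [R] end.

Lemma start_points_sub w R x : In x (start_points w R) -> In x [R; first_fn w R].
Proof. destruct w as [|[h|b] l]; simpl; intuition. Qed.

Lemma last_in (w : list sym) d : w <> [] -> In (last w d) w.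
Proof. intros H. destruct (exists_last H) as [l [a E]]. rewrite E, last_last. apply in_or_app; simpl; auto. Qed.

(* The construction for a cofinitary group G, the family F, the real z, and
   an enumeration eG of (a superset of) G. *)
Section Construction.
Variables (G F : (nat -> nat) -> Prop) (z : nat -> bool).
Hypothesis HGsub : IsSubgroup G.
Hypothesis HGcof : Cofinitary G.
Variable eG : nat -> (nat -> nat).

Definition word_at : nat -> list sym := decode_word eG.

(* The words whose fixed points are to be protected... *)
Definition target (w : list sym) : Prop := reduced G w /\ cyc_reduced w.
Definition words_upto (s : nat) : list (list sym) := map word_at (seq 0 (S s)).
(* ...and the words that code z. *)
Definition coding_word (i : nat) : Prop := reduced G (word_at i) /\ hasX (word_at i).

Lemma reduced_good_letter w h : reduced G w -> In (SG h) w -> good_letter h.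
Proof.
  intros [HF _] Hi. rewrite Forall_forall in HF. destruct (HF _ Hi) as [Gh Hn].
  split; [apply (G_inj G HGsub); auto|exact (HGcof h Gh Hn)].
Qed.

Lemma target_good_letters s : forall w, In w (words_upto s) -> target w ->
  forall h, In (SG h) w -> good_letter h.
Proof. intros w _ [HR _] h Hi. eapply reduced_good_letter; eauto. Qed.

Lemma in_words_upto i s : i <= s -> In (word_at i) (words_upto s).
Proof. intros H. apply in_map, in_seq. lia. Qed.

Lemma coding_word_shape i : coding_word i ->
  (exists b0 l, word_at i = SX b0 :: l) \/ (exists h b0 l, word_at i = SG h :: SX b0 :: l).
Proof.
  intros [[HF HC] [bx Hx]]. destruct (word_at i) as [|[h|b0] l]; [destruct Hx| |left; eauto].
  right. destruct l as [|[h2|b0] l]; [destruct Hx as [E|[]]; discriminate|simpl in HC; tauto|eauto].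
Qed.

Lemma first_fn_inj i : coding_word i -> inj (first_fn (word_at i)).
Proof.
  intros [[HF _] _]. unfold first_fn. destruct (word_at i) as [|[h|b] l]; try (intros x y; lia).
  inversion HF; subst. apply (G_inj G HGsub). apply H1.
Qed.

Lemma last_fn_bij i : coding_word i -> exists kinv, forall y, last_fn (word_at i) (kinv y) = y.
Proof.
  intros [[HF _] [b Hb]]. unfold last_fn.
  assert (Hne : word_at i <> []) by (intros E; rewrite E in Hb; destruct Hb).
  pose proof (last_in _ (SX true) Hne) as Hin.
  destruct (last (word_at i) (SX true)) as [h|b']; [|exists (fun y => y); auto].
  rewrite Forall_forall in HF. destruct (HF _ Hin) as [Gh _].
  destruct HGsub as [Hbij _]. destruct (Hbij h Gh) as [hi [E1 _]]. exists hi; auto.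
Qed.

Definition gap (i : nat) (b : bool) : nat :=
  epsilon (inhabits 0) (fun d => gap_ok (last_fn (word_at i)) (first_fn (word_at i)) b d).

Lemma gap_spec i b : coding_word i -> gap_ok (last_fn (word_at i)) (first_fn (word_at i)) b (gap i b).
Proof.
  intros Hc. unfold gap. apply epsilon_spec.
  destruct (last_fn_bij i Hc) as [kinv Hk].
  destruct (gap_exists _ kinv _ Hk (first_fn_inj i Hc) b) as [d Hd]. eauto.
Qed.

Lemma code_bit s i p R L b : coding_word i ->
  (forall x, In x (start_points (word_at i) R) -> ~ occurs p x) ->
  exists q v, safe_ext target (words_upto s) p q /\ path q (word_at i) R v /\ Nat.odd v = b /\
    (forall x, In x (start_points (word_at i) (v + gap i b)) -> ~ occurs q x /\ ~ In x L) /\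
    (forall x, occurs q x -> occurs p x \/ In x (start_points (word_at i) R) \/ ~ In x L).
Proof.
  intros Hc HR. pose proof (gap_spec i b Hc) as HD. pose proof Hc as [[HF HC] _].
  destruct (coding_word_shape i Hc) as [[b0 [l E]]|[h [b0 [l E]]]]; rewrite E in *.
  - destruct (realise_word target (words_upto s) (target_good_letters s) L b (gap i b) S
                ltac:(intros x y; lia) (length l) l b0 p R (le_n _) HC
                (fun h Hi => reduced_good_letter _ h (conj HF HC) (or_intror Hi))
                (free_fresh b0 R p (HR R (or_introl eq_refl))) HD)
      as [q [v [He [Hp [Ho [Hn Ha]]]]]].
    exists q, v. do 3 (split; [assumption|]). split.
    + intros x [<-|[]]. apply Hn. simpl; auto.
    + intros x Hx. destruct (Ha x Hx) as [Y|[->|Y]]; simpl; auto.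
  - assert (Hh : good_letter h) by (apply (reduced_good_letter _ h (conj HF HC)); simpl; auto).
    destruct (realise_word target (words_upto s) (target_good_letters s) L b (gap i b) h
                (proj1 Hh) (length l) l b0 p (h R) (le_n _) (chain_tail _ _ HC)
                (fun h' Hi => reduced_good_letter _ h' (conj HF HC) (or_intror (or_intror Hi)))
                (free_fresh b0 (h R) p (HR (h R) (or_intror (or_introl eq_refl)))) HD)
      as [q [v [He [Hp [Ho [Hn Ha]]]]]].
    exists q, v. split; [assumption|]. split; [exists (h R); split; [reflexivity|exact Hp]|].
    split; [assumption|]. split; [exact Hn|].
    intros x Hx. destruct (Ha x Hx) as [Y|[->|Y]]; simpl; auto.
Qed.

Definition current_starts (r : nat -> nat) (i : nat) : list nat := start_points (word_at i) (r i).

Definition starts_fresh (p : list (nat * nat)) (r : nat -> nat) (Is : list nat) : Prop :=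
  (forall i, In i Is -> coding_word i -> forall x, In x (current_starts r i) -> ~ occurs p x) /\
  (forall i j, In i Is -> In j Is -> coding_word i -> coding_word j -> i <> j ->
     forall x, In x (current_starts r i) -> ~ In x (current_starts r j)).

Definition update (r : nat -> nat) (i R : nat) : nat -> nat :=
  fun j => if Nat.eq_dec j i then R else r j.

Definition reserved (r : nat -> nat) (Is : list nat) (s : nat) : list nat :=
  flat_map (current_starts r) Is ++ seq 0 (S s).

Lemma current_starts_update_ne r i R j : j <> i -> current_starts (update r i R) j = current_starts r j.
Proof. intros H. unfold current_starts, update. destruct (Nat.eq_dec j i); congruence. Qed.

Lemma current_starts_update_eq r i R : current_starts (update r i R) i = start_points (word_at i) R.
Proof. unfold current_starts, update. destruct (Nat.eq_dec i i); congruence. Qed.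

Lemma in_reserved r Is s j x : In j Is -> In x (current_starts r j) -> In x (reserved r Is s).
Proof. intros Hj Hx. apply in_or_app. left. apply in_flat_map. eauto. Qed.

Lemma notin_reserved_gt r Is s x : ~ In x (reserved r Is s) -> s < x.
Proof.
  intros H. destruct (Nat.lt_ge_cases s x); auto. exfalso. apply H.
  apply in_or_app. right. apply in_seq. lia.
Qed.

Lemma starts_fresh_incl p r Is Is' : starts_fresh p r Is -> incl Is' Is -> starts_fresh p r Is'.
Proof. intros [F1 F2] H. split; [intros i Hi; apply F1; auto|intros i j Hi Hj; apply F2; auto]. Qed.

Lemma starts_fresh_update p q r Is i R s :
  starts_fresh p r Is -> In i Is -> coding_word i ->
  (forall x, In x (start_points (word_at i) R) -> ~ occurs q x /\ ~ In x (reserved r Is s)) ->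
  (forall x, occurs q x -> occurs p x \/ In x (current_starts r i) \/ ~ In x (reserved r Is s)) ->
  starts_fresh q (update r i R) Is.
Proof.
  intros [F1 F2] Hi Gi HN HD. split.
  - intros j Hj Gj x Hx. destruct (Nat.eq_dec j i) as [->|Hne].
    + rewrite current_starts_update_eq in Hx. apply HN; auto.
    + rewrite current_starts_update_ne in Hx; auto. intros Hq. destruct (HD x Hq) as [Y|[Y|Y]].
      * exact (F1 j Hj Gj x Hx Y).
      * exact (F2 i j Hi Hj Gi Gj (not_eq_sym Hne) x Y Hx).
      * exact (Y (in_reserved r Is s j x Hj Hx)).
  - intros j k Hj Hk Gj Gk Hjk x Hx Hx'.
    destruct (Nat.eq_dec j i) as [->|Hj'].
    + rewrite current_starts_update_eq in Hx. rewrite current_starts_update_ne in Hx' by congruence.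
      exact (proj2 (HN x Hx) (in_reserved r Is s k x Hk Hx')).
    + rewrite current_starts_update_ne in Hx by auto. destruct (Nat.eq_dec k i) as [->|Hk'].
      * rewrite current_starts_update_eq in Hx'. exact (proj2 (HN x Hx') (in_reserved r Is s j x Hj Hx)).
      * rewrite current_starts_update_ne in Hx' by auto. exact (F2 j k Hj Hk Gj Gk Hjk x Hx Hx').
Qed.

Lemma code_step s Is i p r b : starts_fresh p r Is -> In i Is -> coding_word i ->
  exists q v, safe_ext target (words_upto s) p q /\
    starts_fresh q (update r i (v + gap i b)) Is /\
    path q (word_at i) (r i) v /\ Nat.odd v = b /\
    (forall x, In x (start_points (word_at i) (v + gap i b)) -> s < x).
Proof.
  intros HF Hi Gi.
  destruct (code_bit s i p (r i) (reserved r Is s) b Gi (proj1 HF i Hi Gi))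
    as [q [v [He [Hp [Ho [X1 X2]]]]]].
  exists q, v. split; [auto|]. split; [exact (starts_fresh_update p q r Is i _ s HF Hi Gi X1 X2)|].
  split; [auto|]. split; [auto|].
  intros x Hx. apply (notin_reserved_gt r Is s). apply X1; auto.
Qed.

Lemma code_all s Is : forall J p r, starts_fresh p r Is -> incl J Is -> NoDup J ->
  exists q r', safe_ext target (words_upto s) p q /\ starts_fresh q r' Is /\
    (forall i, ~ In i J -> r' i = r i) /\
    (forall i, In i J -> coding_word i -> exists v, path q (word_at i) (r i) v /\
        Nat.odd v = z (s - i - 1) /\ r' i = v + gap i (z (s - i - 1))) /\
    (forall i, In i J -> coding_word i -> forall x, In x (current_starts r' i) -> s < x).
Proof.
  induction J as [|i J IH]; intros p r HF Hinc HN.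
  { exists p, r. split; [constructor|]. split; [auto|]. split; [auto|]. split; intros i []. }
  inversion HN as [|? ? HiJ HNJ]; subst.
  destruct (IH p r HF (fun x Hx => Hinc x (or_intror Hx)) HNJ) as [q1 [r1 [E1 [F1 [U1 [C1 P1]]]]]].
  assert (Hi : In i Is) by (apply Hinc; simpl; auto).
  assert (Ri : r1 i = r i) by (apply U1; auto).
  destruct (classic (coding_word i)) as [Gi|Gi].
  2:{ exists q1, r1. split; [auto|]. split; [auto|]. split.
      - intros j Hj. apply U1. intros Hj'; apply Hj; simpl; auto.
      - split; intros j [->|Hj] Gj; solve [contradiction | apply C1; auto | apply P1; auto]. }
  destruct (code_step s Is i q1 r1 (z (s - i - 1)) F1 Hi Gi) as [q [v [E2 [F2 [Hp [Ho Hgt]]]]]].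
  exists q, (update r1 i (v + gap i (z (s - i - 1)))).
  split; [exact (safe_ext_trans _ _ _ _ _ E1 E2)|]. split; [exact F2|]. split; [|split].
  - intros j Hj. unfold update. destruct (Nat.eq_dec j i) as [->|Hne]; [exfalso; apply Hj; simpl; auto|].
    apply U1. intros Hj'. apply Hj; simpl; auto.
  - intros j [->|Hj] Gj.
    + exists v. rewrite <- Ri. split; [exact Hp|]. split; [exact Ho|].
      unfold update. destruct (Nat.eq_dec j j); congruence.
    + destruct (C1 j Hj Gj) as [v' [Hp' [Ho' Er']]]. exists v'.
      split; [eapply path_mono; [eapply safe_ext_incl; eauto|exact Hp']|]. split; [auto|].
      unfold update. destruct (Nat.eq_dec j i) as [->|]; [contradiction|auto].
  - intros j [->|Hj] Gj x Hx.
    + rewrite current_starts_update_eq in Hx. auto.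
    + rewrite current_starts_update_ne in Hx by (intros ->; contradiction). apply (P1 j Hj Gj); auto.
Qed.

Lemma starts_fresh_add p r Is i R : starts_fresh p r Is -> ~ In i Is ->
  (coding_word i -> forall x, In x (start_points (word_at i) R) ->
     ~ occurs p x /\ ~ In x (flat_map (current_starts r) Is)) ->
  starts_fresh p (update r i R) (i :: Is).
Proof.
  intros [F1 F2] HiIs HR.
  assert (Hold : forall j, In j Is -> current_starts (update r i R) j = current_starts r j)
    by (intros j Hj; apply current_starts_update_ne; intros ->; contradiction).
  split.
  - intros j [<-|Hj] Gj x Hx.
    + rewrite current_starts_update_eq in Hx. apply HR; auto.
    + rewrite Hold in Hx; auto. eapply F1; eauto.
  - intros j k [<-|Hj] [<-|Hk] Gj Gk Hjk x Hx Hx'; try congruence.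
    + rewrite current_starts_update_eq in Hx. rewrite Hold in Hx' by auto.
      apply (proj2 (HR Gj x Hx)). apply in_flat_map. eauto.
    + rewrite current_starts_update_eq in Hx'. rewrite Hold in Hx by auto.
      apply (proj2 (HR Gk x Hx')). apply in_flat_map. eauto.
    + rewrite Hold in Hx, Hx' by auto. exact (F2 j k Hj Hk Gj Gk Hjk x Hx Hx').
Qed.

Lemma start_new_word s p r : starts_fresh p r (seq 0 s) ->
  (forall i, i < s -> coding_word i -> forall x, In x (current_starts r i) -> s < x) ->
  exists r', starts_fresh p r' (seq 0 (S s)) /\ (forall i, i <> s -> r' i = r i) /\
    (forall i, i <= s -> coding_word i -> forall x, In x (current_starts r' i) -> s < x).
Proof.
  intros HF Hgt. set (L := points p ++ reserved r (seq 0 s) s).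
  assert (Hev : eventually (fun R => coding_word s ->
                  ~ In R L /\ ~ In (first_fn (word_at s) R) L)).
  { apply eventually_impl. intros Gs.
    apply eventually_and; [apply eventually_notin|apply eventually_notin_inj, first_fn_inj; auto]. }
  destruct Hev as [R HR]. specialize (HR R (le_n R)).
  assert (HRx : coding_word s -> forall x, In x (start_points (word_at s) R) -> ~ In x L).
  { intros Gs x Hx. destruct (HR Gs) as [H1 H2].
    destruct (start_points_sub _ _ _ Hx) as [<-|[<-|[]]]; auto. }
  exists (update r s R). split; [|split].
  - apply (starts_fresh_incl _ _ (s :: seq 0 s)).
    + apply starts_fresh_add; [auto|rewrite in_seq; lia|].
      intros Gs x Hx. split; intros H; apply (HRx Gs x Hx); unfold L, reserved; auto using in_or_app.
    + intros i Hi. apply in_seq in Hi. destruct (Nat.eq_dec i s) as [->|]; [left; auto|right].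
      apply in_seq. lia.
  - intros i Hi. unfold update. destruct (Nat.eq_dec i s); congruence.
  - intros i Hi Gi x Hx. destruct (Nat.eq_dec i s) as [->|Hne].
    + rewrite current_starts_update_eq in Hx. apply (notin_reserved_gt r (seq 0 s) s).
      intros H. apply (HRx Gi x Hx). unfold L. auto using in_or_app.
    + rewrite current_starts_update_ne in Hx by auto. apply (Hgt i); auto. lia.
Qed.

Lemma starts_fresh_cons p r Is e : starts_fresh p r Is ->
  (forall i, In i Is -> coding_word i -> ~ In (fst e) (current_starts r i) /\ ~ In (snd e) (current_starts r i)) ->
  starts_fresh (e :: p) r Is.
Proof.
  intros [F1 F2] H. split; auto. intros i Hi Gi x Hx Hd. apply occurs_cons in Hd.
  destruct (H i Hi Gi) as [H1 H2]. destruct Hd as [E|[E|E]]; subst; eauto. eapply F1; eauto.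
Qed.

Lemma add_free_edge s Is p r b a : starts_fresh p r Is -> free b a p ->
  (forall i, In i Is -> coding_word i -> ~ In a (current_starts r i)) ->
  exists m, safe_ext target (words_upto s) p (edge b a m :: p) /\ starts_fresh (edge b a m :: p) r Is.
Proof.
  intros HF Hf Ha.
  destruct (eventually_and _ _ (eventually_safe_target target (words_upto s) (target_good_letters s) p a)
              (eventually_notin (flat_map (current_starts r) Is))) as [B HB].
  destruct (HB B (le_n _)) as [HC Hn]. exists B. split; [apply safe_ext_one; auto|].
  apply starts_fresh_cons; auto. intros i Hi Gi.
  destruct b; simpl; split; auto; intros Hx; apply Hn; apply in_flat_map; eauto.
Qed.

Lemma make_total s p r : starts_fresh p r (seq 0 (S s)) ->
  (forall i, i <= s -> coding_word i -> forall x, In x (current_starts r i) -> s < x) ->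
  exists q, safe_ext target (words_upto s) p q /\ starts_fresh q r (seq 0 (S s)) /\
    dom q s /\ ran q s.
Proof.
  intros HF Hgt.
  assert (Hs : forall i, In i (seq 0 (S s)) -> coding_word i -> ~ In s (current_starts r i)).
  { intros i Hi Gi Hx. apply in_seq in Hi. specialize (Hgt i ltac:(lia) Gi s Hx). lia. }
  assert (Hdom : exists q1, safe_ext target (words_upto s) p q1 /\
                   starts_fresh q1 r (seq 0 (S s)) /\ dom q1 s).
  { destruct (classic (dom p s)) as [D|D]; [exists p; split; [constructor|auto]|].
    destruct (add_free_edge s _ p r true s HF D Hs) as [m [E Fm]].
    exists (edge true s m :: p). split; [auto|]. split; [auto|]. exists m. simpl; auto. }
  destruct Hdom as [q1 [E1 [F1 D1]]].
  destruct (classic (ran q1 s)) as [D|D]; [exists q1; auto|].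
  destruct (add_free_edge s _ q1 r false s F1 D Hs) as [m [E Fm]].
  exists (edge false s m :: q1). split; [eapply safe_ext_trans; eauto|]. split; [auto|].
  split; [destruct D1 as [y Hy]; exists y; simpl; auto|exists m; simpl; auto].
Qed.

(* A permutation f ∉ G with <G, f> cofinitary: the edges n ↦ f n are safe
   for almost all n. *)
Section Hit.
Variable f : nat -> nat.
Hypothesis Hfb : is_bij f.
Hypothesis HnG : ~ G f.
Hypothesis Hfc : Cofinitary (genWith G f).

Lemma genWith_eventually_moves k : genWith G f k -> ~ (forall n, k n = n) ->
  eventually (fun n => k n <> n).
Proof.
  intros Hk Hn. apply eventually_not_fixed. apply Hfc; auto. apply not_all_ex_not in Hn. exact Hn.
Qed.

Lemma eventually_safe_hit_letter p h : G h -> nontrivial h ->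
  eventually (fun n => safe_letter p n (f n) h).
Proof.
  intros Gh Hnt. destruct Hfb as [finv [Hf1 Hf2]].
  assert (If : inj f) by (intros x y E; rewrite <- (Hf2 x), <- (Hf2 y); congruence).
  assert (Ih : inj h) by (apply (G_inj G HGsub); auto).
  (* h ∘ f and f⁻¹ ∘ h are nontrivial elements of <G, f>, as f ∉ G *)
  assert (C2 : eventually (fun n => h (f n) <> n)).
  { apply genWith_eventually_moves.
    - apply (gen_comp _ h f); apply gen_base; [left|right]; auto.
    - intros Hid. apply HnG. destruct HGsub as [_ [_ [_ Hinv]]]. apply (Hinv h f Gh Hid).
      intros n. assert (E : h n = finv n) by (rewrite <- (Hf1 n) at 1; rewrite Hid; reflexivity).
      rewrite E. apply Hf1. }
  assert (C5 : eventually (fun n => finv (h n) <> n)).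
  { apply genWith_eventually_moves.
    - apply (gen_comp _ finv h); [|apply gen_base; left; auto].
      apply (gen_inv _ f finv); auto. apply gen_base; right; auto.
    - intros Hid. apply HnG. replace f with h; auto. apply functional_extensionality. intros n.
      rewrite <- (Hid n) at 2. rewrite Hf1. reflexivity. }
  assert (C3 : eventually (fun n => h (f n) <> f n)).
  { destruct (HGcof h Gh Hnt) as [N HN]. apply (eventually_mono (fun n => ~ In (f n) (seq 0 N))).
    - intros n Hn E. apply Hn. apply in_seq. specialize (HN _ E). lia.
    - apply eventually_notin_inj; auto. }
  apply (eventually_mono (fun n => ((~ In (h (f n)) (points p) /\ h (f n) <> n) /\ h (f n) <> f n) /\
                                   (~ In (f n) (map h (points p)) /\ finv (h n) <> n))).
  - intros n [[[A1 A2] A3] [A4 A5]]. do 3 (split; [auto|]).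
    intros b Eb. split.
    + intros Hb. apply A4. rewrite <- Eb. apply in_map. exact Hb.
    + intros ->. apply A5. rewrite Eb. apply Hf2.
  - repeat apply eventually_and; auto; apply eventually_notin_inj; auto.
    intros x y E. apply If, Ih; auto.
Qed.

Lemma eventually_safe_hit p s : eventually (fun n => safe_target target p (words_upto s) n (f n)).
Proof.
  destruct Hfb as [finv [Hf1 Hf2]].
  assert (If : inj f) by (intros x y E; rewrite <- (Hf2 x), <- (Hf2 y); congruence).
  unfold safe_target. apply eventually_and; [apply eventually_notin_inj; auto|].
  apply eventually_and.
  { apply genWith_eventually_moves; [apply gen_base; right; auto|].
    intros Hid. apply HnG. destruct HGsub as [_ [Gid _]].
    replace f with (fun n : nat => n); auto. apply functional_extensionality. intros; auto. }
  apply (eventually_mono (fun n => forall w, In w (words_upto s) -> target w -> forall t, In t w ->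
           match t with SG h => safe_letter p n (f n) h | _ => True end)).
  { intros m H w Hw Pw h Hh. exact (H w Hw Pw (SG h) Hh). }
  apply eventually_all. intros w Hw. apply eventually_impl. intros [[HFw _] _].
  apply eventually_all. intros [h|b] Ht; [|exists 0; auto].
  rewrite Forall_forall in HFw. destruct (HFw _ Ht) as [Gh Hnt].
  apply eventually_safe_hit_letter; auto.
Qed.

Lemma add_hit s Is p r : starts_fresh p r Is ->
  exists n, s <= n /\ safe_ext target (words_upto s) p ((n, f n) :: p) /\
    starts_fresh ((n, f n) :: p) r Is.
Proof.
  intros HF. destruct Hfb as [finv [Hf1 Hf2]].
  assert (If : inj f) by (intros x y E; rewrite <- (Hf2 x), <- (Hf2 y); congruence).
  assert (Hev : eventually (fun n => safe_target target p (words_upto s) n (f n) /\ (s <= n /\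
            ~ In n (points p) /\ ~ In n (flat_map (current_starts r) Is) /\
            ~ In (f n) (flat_map (current_starts r) Is)))).
  { apply eventually_and; [apply eventually_safe_hit|].
    apply eventually_and; [exists s; auto|].
    repeat apply eventually_and; try apply eventually_notin. apply eventually_notin_inj; auto. }
  destruct Hev as [B HB]. destruct (HB B (le_n B)) as [HC [Hn [H1 [H2 H3]]]].
  exists B. split; [auto|]. split.
  - apply (safe_ext_one _ _ _ true); auto. intros [y Hy]. apply H1, occurs_dom. exists y; auto.
  - apply starts_fresh_cons; auto. intros i Hi Gi. simpl.
    split; intros Hx; [apply H2|apply H3]; apply in_flat_map; eauto.
Qed.
End Hit.

Section HitAll.
Variable eF : nat -> (nat -> nat).
Hypothesis HFsym : forall f, F f -> is_bij f /\ ~ G f.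
Hypothesis HFcof : forall f, F f -> Cofinitary (genWith G f).

Lemma hit_all s Is r J : forall p, starts_fresh p r Is ->
  exists q, safe_ext target (words_upto s) p q /\ starts_fresh q r Is /\
    forall j, In j J -> F (eF j) -> exists n, s <= n /\ In (n, eF j n) q.
Proof.
  induction J as [|j J IH]; intros p HF.
  { exists p. split; [constructor|]. split; [auto|]. intros j []. }
  destruct (IH p HF) as [q1 [E1 [F1 H1]]].
  destruct (classic (F (eF j))) as [Fj|Fj].
  - destruct (HFsym _ Fj) as [Hb HnG].
    destruct (add_hit (eF j) Hb HnG (HFcof _ Fj) s Is q1 r F1) as [n [Hn [E2 F2]]].
    exists ((n, eF j n) :: q1). split; [eapply safe_ext_trans; eauto|]. split; [auto|].
    intros j' [->|Hj'] Fj'; [exists n; simpl; auto|].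
    destruct (H1 j' Hj' Fj') as [n' [Hn' Hi']]. exists n'. simpl; auto.
  - exists q1. split; [auto|]. split; [auto|]. intros j' [->|Hj'] Fj'; [contradiction|auto].
Qed.

Definition stage_spec (s : nat) (p : list (nat * nat)) (r : nat -> nat)
    (p' : list (nat * nat)) (r' : nat -> nat) : Prop :=
  partial_inj p' /\ starts_fresh p' r' (seq 0 (S s)) /\ safe_ext target (words_upto s) p p' /\
  dom p' s /\ ran p' s /\
  (forall j, j <= s -> F (eF j) -> exists n, s <= n /\ In (n, eF j n) p') /\
  (forall i, i < s -> coding_word i -> exists v, path p' (word_at i) (r i) v /\
     Nat.odd v = z (s - i - 1) /\ r' i = v + gap i (z (s - i - 1))).

Lemma stage_exists s p r : partial_inj p -> starts_fresh p r (seq 0 s) ->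
  exists p' r', stage_spec s p r p' r'.
Proof.
  intros HI HF.
  destruct (code_all s (seq 0 s) (seq 0 s) p r HF (incl_refl _) (seq_NoDup _ _))
    as [q1 [r1 [E1 [F1 [U1 [C1 P1]]]]]].
  destruct (start_new_word s q1 r1 F1) as [r2 [F2 [U2 P2]]].
  { intros i Hi Gi. apply P1; auto. apply in_seq; lia. }
  destruct (make_total s q1 r2 F2 P2) as [q2 [E2 [F3 [D2 R2]]]].
  destruct (hit_all s (seq 0 (S s)) r2 (seq 0 (S s)) q2 F3) as [q3 [E3 [F4 H3]]].
  assert (E23 : safe_ext target (words_upto s) q1 q3) by (eapply safe_ext_trans; eauto).
  assert (E : safe_ext target (words_upto s) p q3) by (eapply safe_ext_trans; eauto).
  exists q3, r2. unfold stage_spec. split; [eapply safe_ext_partial_inj; eauto|].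
  do 2 (split; [auto|]).
  split; [destruct D2 as [y Hy]; exists y; exact (safe_ext_incl _ _ _ _ E3 _ Hy)|].
  split; [destruct R2 as [y Hy]; exists y; exact (safe_ext_incl _ _ _ _ E3 _ Hy)|].
  split; [intros j Hj Fj; apply H3; auto; apply in_seq; lia|].
  intros i Hi Gi. destruct (C1 i ltac:(apply in_seq; lia) Gi) as [v [Hp [Ho Er]]].
  exists v. split; [eapply path_mono; [eapply safe_ext_incl; exact E23|exact Hp]|].
  split; [auto|]. rewrite U2 by lia. auto.
Qed.
End HitAll.
End Construction.

(** * Decoding z from w(g) *)

Fixpoint const_prog (k : nat) : prf := match k with 0 => PZero | S k' => PComp PSucc [const_prog k'] end.

Lemma const_prog_ev o k v : peval o (const_prog k) v k.
Proof. induction k; simpl; [constructor|]. econstructor; [econstructor; eauto; constructor|constructor]. Qed.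

Fixpoint add_const_prog (d : nat) (e : prf) : prf :=
  match d with 0 => e | S d' => PComp PSucc [add_const_prog d' e] end.

Lemma add_const_prog_ev o d e v x : peval o e v x -> peval o (add_const_prog d e) v (x + d).
Proof.
  intros H. induction d; simpl; [rewrite Nat.add_0_r; auto|].
  rewrite Nat.add_succ_r. econstructor; [econstructor; eauto; constructor|constructor].
Qed.

Lemma primrec_ev o f g v a0 (st : nat -> nat -> nat) :
  peval o f v a0 -> (forall n r, peval o g (n :: r :: v) (st n r)) ->
  forall n, peval o (PPrimRec f g) (n :: v) (nat_rect (fun _ => nat) a0 st n).
Proof. intros Hf Hg n. induction n; simpl; [constructor; auto|econstructor; eauto]. Qed.

Definition not_prog : prf := PPrimRec (const_prog 1) PZero.

Lemma not_prog_ev o y : peval o not_prog [y] (if y =? 0 then 1 else 0).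
Proof.
  pose proof (primrec_ev o (const_prog 1) PZero [] 1 (fun _ _ => 0) (const_prog_ev o 1 [])
                (fun n r => ev_zero o _) y) as H.
  destruct y; exact H.
Qed.

Definition parity_prog : prf := PPrimRec PZero (PComp not_prog [PProj 1]).

Lemma parity_prog_ev o x : peval o parity_prog [x] (if Nat.odd x then 1 else 0).
Proof.
  assert (H : forall n r, peval o (PComp not_prog [PProj 1]) (n :: r :: []) (if r =? 0 then 1 else 0)).
  { intros n r. econstructor; [|apply not_prog_ev].
    econstructor; [apply (ev_proj o 1 [n; r]); simpl; lia|constructor]. }
  pose proof (primrec_ev o PZero _ [] 0 _ (ev_zero o []) H x) as H2.
  replace (if Nat.odd x then 1 else 0)
    with (nat_rect (fun _ => nat) 0 (fun _ r => if r =? 0 then 1 else 0) x); auto.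
  clear H2 H. induction x; simpl; auto. rewrite IHx, Nat.odd_succ. unfold Nat.odd.
  destruct (Nat.even x); auto.
Qed.

Definition cond_prog (d0 d1 : nat) : prf :=
  PPrimRec (add_const_prog d0 (PProj 0)) (add_const_prog d1 (PProj 2)).

Lemma cond_prog_ev o d0 d1 b y : peval o (cond_prog d0 d1) [b; y] (if b =? 0 then y + d0 else y + d1).
Proof.
  pose proof (primrec_ev o (add_const_prog d0 (PProj 0)) (add_const_prog d1 (PProj 2)) [y]
                (y + d0) (fun _ _ => y + d1)) as H.
  specialize (H (add_const_prog_ev o d0 _ _ y (ev_proj o 0 [y] ltac:(simpl; lia)))).
  specialize (H (fun n r => add_const_prog_ev o d1 _ _ y (ev_proj o 2 [n; r; y] ltac:(simpl; lia))) b).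
  destruct b; exact H.
Qed.

Definition next_start (o : nat -> nat) (d0 d1 r : nat) : nat :=
  o r + (if Nat.odd (o r) then d1 else d0).

Definition step_prog (d0 d1 : nat) : prf :=
  PComp (cond_prog d0 d1) [PComp parity_prog [PComp POracle [PProj 1]]; PComp POracle [PProj 1]].

Lemma step_prog_ev o d0 d1 n r : peval o (step_prog d0 d1) [n; r] (next_start o d0 d1 r).
Proof.
  assert (Ho : peval o (PComp POracle [PProj 1]) [n; r] (o r)).
  { econstructor; [econstructor; [apply (ev_proj o 1 [n; r]); simpl; lia|constructor]|constructor]. }
  unfold step_prog. econstructor.
  - econstructor; [econstructor; [econstructor; [exact Ho|constructor]|apply parity_prog_ev]|].
    econstructor; [exact Ho|constructor].
  - pose proof (cond_prog_ev o d0 d1 (if Nat.odd (o r) then 1 else 0) (o r)) as H.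
    unfold next_start. destruct (Nat.odd (o r)); exact H.
Qed.

Definition start_seq (o : nat -> nat) (c0 d0 d1 : nat) (j : nat) : nat :=
  nat_rect (fun _ => nat) c0 (fun _ r => next_start o d0 d1 r) j.

Lemma decoder (z : nat -> bool) (o : nat -> nat) c0 d0 d1 :
  (forall j, z j = Nat.odd (o (start_seq o c0 d0 d1 j))) -> RecursiveIn z o.
Proof.
  intros Hz. exists (PComp parity_prog [PComp POracle [PPrimRec (const_prog c0) (step_prog d0 d1)]]).
  intros n. rewrite Hz. econstructor; [|apply parity_prog_ev].
  econstructor; [|constructor]. econstructor; [|constructor]. econstructor; [|constructor].
  exact (primrec_ev o (const_prog c0) (step_prog d0 d1) [] c0 (fun _ r => next_start o d0 d1 r)
           (const_prog_ev o c0 []) (fun n r => step_prog_ev o d0 d1 n r) n).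
Qed.

(* x^k becomes |k| letters x (k > 0) or x⁻¹ (k < 0).  A word of W_G is
   evaluated from its last letter on, hence the reversal. *)
Definition expand (a : letter) : list sym :=
  match a with LG h => [SG h] | LX k => repeat (SX (0 <? k)%Z) (Z.abs_nat k) end.

Fixpoint to_syms (w : list letter) : list sym :=
  match w with [] => [] | a :: w' => to_syms w' ++ expand a end.

Lemma run_repeat g ginv t n a : run g ginv (repeat t n) a = Nat.iter n (letter_fn g ginv t) a.
Proof. revert a; induction n; intros a; simpl; auto. rewrite IHn, <- Nat.iter_succ_r. reflexivity. Qed.

Lemma word_eval_to_syms g ginv w n : word_eval g ginv w n = run g ginv (to_syms w) n.
Proof.
  induction w as [|a w IH]; simpl; auto. rewrite run_app, <- IH.
  destruct a as [h|k]; simpl; auto. rewrite run_repeat. destruct (0 <? k)%Z; reflexivity.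
Qed.

Lemma chain_repeat t n : compatible t t -> chain (repeat t n).
Proof. intros H. induction n; simpl; auto. destruct n; simpl in *; auto. Qed.

Lemma to_syms_last w a t1 l1 : to_syms (a :: w) = l1 ++ [t1] ->
  In t1 (expand a) \/ (expand a = [] /\ exists l1', to_syms w = l1' ++ [t1]).
Proof.
  simpl. intros E. destruct (expand a) as [|x l] eqn:Ea.
  - right. split; auto. rewrite app_nil_r in E. eauto.
  - left. destruct (exists_last (l := x :: l) ltac:(discriminate)) as [l' [y Ey]].
    rewrite Ey, app_assoc in E. apply app_inj_tail in E. destruct E as [_ <-].
    rewrite Ey. apply in_or_app; simpl; auto.
Qed.

Lemma reduced_to_syms G w : ReducedWord G w -> reduced G (to_syms w).
Proof.
  intros [HF HA]. split.
  - induction w as [|a w IH]; simpl; [constructor|]. inversion HF; subst. apply Forall_app. split.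
    + apply IH; auto. destruct w as [|b w]; simpl in *; tauto.
    + destruct a as [h|k]; simpl; [constructor; simpl; auto|].
      apply Forall_forall. intros x Hx. apply repeat_spec in Hx. subst. simpl; auto.
  - induction w as [|a w IH]; simpl; auto.
    assert (HA' : alternating w) by (destruct w as [|b w]; simpl in *; tauto).
    apply chain_app.
    + apply IH; auto. inversion HF; auto.
    + destruct a as [h|k]; simpl; auto. apply chain_repeat. simpl; auto.
    + (* consecutive letters of w are of different kinds, and nonzero powers are nonempty *)
      intros t1 t2 l1' l2' E1 E2.
      destruct w as [|b w]; [simpl in E1; destruct l1'; discriminate|].
      simpl in HA. destruct HA as [Hsk _].
      destruct (to_syms_last w b t1 l1' E1) as [Hin|[Hne _]].
      * assert (Hin2 : In t2 (expand a)) by (rewrite E2; simpl; auto).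
        destruct a as [h|k]; destruct b as [h'|k']; simpl in Hsk; try tauto; simpl in Hin, Hin2.
        -- destruct Hin2 as [<-|[]]. apply repeat_spec in Hin. subst. simpl; auto.
        -- destruct Hin as [<-|[]]. apply repeat_spec in Hin2. subst. simpl; auto.
      * exfalso. destruct b as [h'|k']; simpl in Hne; [discriminate|].
        inversion HF as [|? ? _ HF']; subst. inversion HF'; subst. simpl in *.
        destruct (Z.abs_nat k') eqn:Ek; [lia|discriminate].
Qed.

Lemma hasX_to_syms w : (forall k, In (LX k) w -> k <> 0%Z) -> has_x w -> hasX (to_syms w).
Proof.
  intros Hk [k Hi]. induction w as [|a w IH]; simpl in *; [destruct Hi|].
  destruct Hi as [->|Hi].
  - exists (0 <? k)%Z. apply in_or_app. right. simpl.
    assert (Z.abs_nat k <> 0) by (specialize (Hk k (or_introl eq_refl)); lia).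
    destruct (Z.abs_nat k); [lia|simpl; auto].
  - destruct (IH (fun k' H => Hk k' (or_intror H)) Hi) as [b Hb]. exists b. apply in_or_app; auto.
Qed.

(** * The limit permutation *)

(* For a fixed finite p, the paths of a word with x start in a finite set:
   the first x-step needs a point of p, and the letters of G before it are
   injective. *)
Lemma path_start_bounded p l : hasX l -> (forall h, In (SG h) l -> inj h) ->
  exists B, forall a c, path p l a c -> a < B.
Proof.
  induction l as [|t l IH]; intros HX Hi; [destruct HX as [? []]|].
  destruct t as [h|b].
  - destruct IH as [B HB]; [destruct HX as [b [E|H]]; [discriminate|exists b; auto]|
                            intros h' H; apply Hi; simpl; auto|].
    destruct (eventually_notin_inj h (seq 0 B) (Hi h (or_introl eq_refl))) as [B' HB'].
    exists B'. intros a c [x [Ex Hp]]. simpl in Ex. subst x. specialize (HB _ _ Hp).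
    destruct (Nat.lt_ge_cases a B') as [|Hge]; auto. exfalso. apply (HB' a Hge). apply in_seq. lia.
  - exists (S (list_max (points p))). intros a c [x [Hs _]].
    pose proof (proj1 (step_X_occurs _ _ _ _ Hs)) as Ha.
    pose proof (proj1 (list_max_le (points p) (list_max (points p))) (le_n _)) as H1.
    rewrite Forall_forall in H1. specialize (H1 a Ha). lia.
Qed.

Section Limit.
Variables (G F : (nat -> nat) -> Prop) (z : nat -> bool).
Hypothesis HGsub : IsSubgroup G.
Hypothesis HGcof : Cofinitary G.
Variable eG : nat -> (nat -> nat).
Hypothesis HeG : forall f, G f -> exists k, eG k = f.
Variable eF : nat -> (nat -> nat).
Hypothesis HeF : forall f, F f -> exists k, eF k = f.
Hypothesis HFsym : forall f, F f -> is_bij f /\ ~ G f.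
Hypothesis HFcof : forall f, F f -> Cofinitary (genWith G f).

Definition state : Type := (list (nat * nat) * (nat -> nat))%type.

Definition next_state (s : nat) (st : state) : state :=
  epsilon (inhabits st) (fun st' => stage_spec G F z eG eF s (fst st) (snd st) (fst st') (snd st')).

Fixpoint states (s : nat) : state :=
  match s with 0 => ([], fun _ => 0) | S s' => next_state s' (states s') end.

Definition approx (s : nat) : list (nat * nat) := fst (states s).
Definition starts (s : nat) : nat -> nat := snd (states s).

Lemma states_inv s : partial_inj (approx s) /\ starts_fresh G eG (approx s) (starts s) (seq 0 s).
Proof.
  induction s as [|s [H1 H2]].
  { split; [split; intros ? ? ? []|split; [intros ? []|intros ? ? []]]. }
  destruct (stage_exists G F z HGsub HGcof eG eF HFsym HFcof s _ _ H1 H2) as [p' [r' Hst]].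
  assert (HS : stage_spec G F z eG eF s (approx s) (starts s) (approx (S s)) (starts (S s))).
  { apply (epsilon_spec (inhabits (states s))
             (fun st' => stage_spec G F z eG eF s (approx s) (starts s) (fst st') (snd st'))).
    exists (p', r'). exact Hst. }
  destruct HS as [A [B _]]. split; auto.
Qed.

Lemma states_step s : stage_spec G F z eG eF s (approx s) (starts s) (approx (S s)) (starts (S s)).
Proof.
  destruct (states_inv s) as [H1 H2].
  destruct (stage_exists G F z HGsub HGcof eG eF HFsym HFcof s _ _ H1 H2) as [p' [r' Hst]].
  apply (epsilon_spec (inhabits (states s))
           (fun st' => stage_spec G F z eG eF s (approx s) (starts s) (fst st') (snd st'))).
  exists (p', r'). exact Hst.
Qed.

Lemma approx_mono s t : s <= t -> incl (approx s) (approx t).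
Proof.
  induction 1; [apply incl_refl|]. eapply incl_tran; eauto.
  destruct (states_step m) as [_ [_ [E _]]]. exact (safe_ext_incl _ _ _ _ E).
Qed.

Definition g_lim (a : nat) : nat := epsilon (inhabits 0) (fun b => exists s, In (a, b) (approx s)).
Definition g_lim_inv (b : nat) : nat := epsilon (inhabits 0) (fun a => exists s, In (a, b) (approx s)).

Lemma g_lim_spec a : exists s, In (a, g_lim a) (approx s).
Proof.
  apply (epsilon_spec (inhabits 0) (fun b => exists s, In (a, b) (approx s))).
  destruct (states_step a) as [_ [_ [_ [[b Hb] _]]]]. exists b, (S a). exact Hb.
Qed.

Lemma g_lim_inv_spec b : exists s, In (g_lim_inv b, b) (approx s).
Proof.
  apply (epsilon_spec (inhabits 0) (fun a => exists s, In (a, b) (approx s))).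
  destruct (states_step b) as [_ [_ [_ [_ [[a Ha] _]]]]]. exists a, (S b). exact Ha.
Qed.

Lemma g_lim_agree a b s : In (a, b) (approx s) -> g_lim a = b.
Proof.
  intros H. destruct (g_lim_spec a) as [s' H']. destruct (proj1 (states_inv (s + s'))) as [I _].
  apply (I a); [apply (approx_mono s')|apply (approx_mono s)]; auto; lia.
Qed.

Lemma g_lim_inv_agree a b s : In (a, b) (approx s) -> g_lim_inv b = a.
Proof.
  intros H. destruct (g_lim_inv_spec b) as [s' H']. destruct (proj1 (states_inv (s + s'))) as [_ I].
  apply (I _ _ b); [apply (approx_mono s')|apply (approx_mono s)]; auto; lia.
Qed.

Lemma g_lim_right_inv n : g_lim (g_lim_inv n) = n.
Proof. destruct (g_lim_inv_spec n) as [s H]. eapply g_lim_agree; eauto. Qed.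

Lemma g_lim_left_inv n : g_lim_inv (g_lim n) = n.
Proof. destruct (g_lim_spec n) as [s H]. eapply g_lim_inv_agree; eauto. Qed.

Lemma path_run s l a c : path (approx s) l a c -> run g_lim g_lim_inv l a = c.
Proof.
  revert a; induction l as [|t l IH]; intros a H; simpl in *; auto.
  destruct H as [b [Hs Hp]]. rewrite <- (IH b Hp). f_equal.
  destruct t as [h|[|]]; simpl in *; auto; [eapply g_lim_agree|eapply g_lim_inv_agree]; eauto.
Qed.

Lemma run_path l : forall a, exists s, path (approx s) l a (run g_lim g_lim_inv l a).
Proof.
  induction l as [|t l IH]; intros a; simpl; [exists 0; auto|].
  destruct (IH (letter_fn g_lim g_lim_inv t a)) as [s Hs].
  assert (Ht : exists s', step (approx s') t a (letter_fn g_lim g_lim_inv t a)).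
  { destruct t as [h|[|]]; simpl; [exists 0; auto|apply g_lim_spec|].
    destruct (g_lim_inv_spec a) as [s' H]. exists s'. exact H. }
  destruct Ht as [s' Hs']. exists (s + s'), (letter_fn g_lim g_lim_inv t a). split.
  - eapply step_mono; [|exact Hs']. apply approx_mono; lia.
  - eapply path_mono; [|exact Hs]. apply approx_mono; lia.
Qed.

Lemma fixed_points_frozen i a : target G (word_at eG i) ->
  forall t, path (approx (i + t)) (word_at eG i) a a -> path (approx i) (word_at eG i) a a.
Proof.
  intros Hw t. induction t as [|t IH]; intros H; [rewrite Nat.add_0_r in H; auto|].
  apply IH. destruct (states_step (i + t)) as [_ [_ [Ext _]]]. rewrite Nat.add_succ_r in H.
  exact (safe_ext_fixed (target G) (fun w Hw => proj2 Hw) _ _ _ Ext _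
           (in_words_upto eG i (i + t) ltac:(lia)) Hw a H).
Qed.

Lemma cyc_reduced_fin_fixed l : reduced G l -> cyc_reduced l -> fin_fixed (run g_lim g_lim_inv l).
Proof.
  intros HR HC. destruct (decode_word_surj G eG HeG l (reduced_sym_in G l HR)) as [i Ei].
  destruct (path_start_bounded (approx i) l (proj1 (proj2 HC))) as [B HB].
  { intros h Hh. exact (proj1 (reduced_good_letter G HGsub HGcof l h HR Hh)). }
  exists B. intros a Ha. destruct (run_path l a) as [s Hs]. rewrite Ha in Hs.
  assert (Hw : target G (word_at eG i)) by (unfold word_at; rewrite Ei; split; auto).
  apply (HB a a). rewrite <- Ei. apply (fixed_points_frozen i a Hw (s - i)).
  unfold word_at. rewrite Ei. eapply path_mono; [|exact Hs]. apply approx_mono. lia.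
Qed.

Lemma genWith_lim_cofinitary : Cofinitary (genWith G g_lim).
Proof.
  intros f Hf Hn.
  destruct (genWith_reduced G HGsub g_lim g_lim_inv g_lim_right_inv g_lim_left_inv f Hf) as [l [HR E]].
  destruct l as [|t l]; [destruct Hn as [n Hn]; exfalso; apply Hn; rewrite E; reflexivity|].
  destruct (reduced_fin_fixed G HGsub HGcof g_lim g_lim_inv g_lim_right_inv g_lim_left_inv
              cyc_reduced_fin_fixed (length (t :: l)) (t :: l) (le_n _) HR ltac:(discriminate))
    as [N HN].
  exists N. intros n Hfn. apply HN. rewrite <- E. auto.
Qed.

Lemma g_lim_hits f : F f -> forall N, exists n, N <= n /\ f n = g_lim n.
Proof.
  intros Ff N. destruct (HeF f Ff) as [j Ej].
  destruct (states_step (N + j)) as [_ [_ [_ [_ [_ [Hh _]]]]]].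
  destruct (Hh j ltac:(lia) ltac:(rewrite Ej; auto)) as [n [Hn Hi]].
  exists n. split; [lia|]. rewrite <- Ej. symmetry. eapply g_lim_agree; eauto.
Qed.

Lemma coding_stage i s : coding_word G eG i -> i < s ->
  let o := run g_lim g_lim_inv (word_at eG i) in
  Nat.odd (o (starts s i)) = z (s - i - 1) /\
  starts (S s) i = next_start o (gap eG i false) (gap eG i true) (starts s i).
Proof.
  intros Gi Hi o. destruct (states_step s) as [_ [_ [_ [_ [_ [_ Hcd]]]]]].
  destruct (Hcd i Hi Gi) as [v [Hp [Ho Er]]].
  assert (Ov : o (starts s i) = v) by exact (path_run _ _ _ _ Hp).
  split; [congruence|]. rewrite Er. unfold next_start. rewrite Ov, Ho.
  destruct (z (s - i - 1)); reflexivity.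
Qed.

Lemma g_lim_codes w : ReducedWord G w -> has_x w -> RecursiveIn z (word_eval g_lim g_lim_inv w).
Proof.
  intros HR HX. pose proof (reduced_to_syms G w HR) as HR'.
  assert (HX' : hasX (to_syms w)).
  { apply hasX_to_syms; auto. intros k Hk. destruct HR as [HF _]. rewrite Forall_forall in HF.
    apply (HF _ Hk). }
  destruct (decode_word_surj G eG HeG (to_syms w) (reduced_sym_in G _ HR')) as [i Ei].
  assert (Gi : coding_word G eG i) by (unfold coding_word, word_at; rewrite Ei; auto).
  set (o := word_eval g_lim g_lim_inv w).
  assert (Ho : forall a, o a = run g_lim g_lim_inv (word_at eG i) a)
    by (intros a; unfold o, word_at; rewrite word_eval_to_syms, Ei; reflexivity).
  set (c0 := starts (S i) i). set (d0 := gap eG i false). set (d1 := gap eG i true).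
  assert (Hseq : forall j, starts (S i + j) i = start_seq o c0 d0 d1 j).
  { induction j as [|j IH]; [rewrite Nat.add_0_r; reflexivity|].
    rewrite Nat.add_succ_r. simpl start_seq. rewrite <- IH.
    destruct (coding_stage i (S i + j) Gi ltac:(lia)) as [_ E]. rewrite E.
    unfold next_start. rewrite !Ho. reflexivity. }
  apply (decoder z o c0 d0 d1). intros j.
  destruct (coding_stage i (S i + j) Gi ltac:(lia)) as [E _].
  replace (S i + j - i - 1) with j in E by lia. rewrite <- Hseq, Ho. auto.
Qed.
End Limit.

Theorem mainTheorem19
  (G : (nat -> nat) -> Prop) (F : (nat -> nat) -> Prop) (z : nat -> bool)
  (HGsub : IsSubgroup G) (HGcof : Cofinitary G) (HGcount : CountableSet G)
  (HFcount : CountableSet F)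
  (HFsym : forall f, F f -> is_bij f /\ ~ G f)
  (HFcof : forall f, F f -> Cofinitary (genWith G f)) :
  exists g ginv : nat -> nat,
    (forall n, g (ginv n) = n) /\ (forall n, ginv (g n) = n) /\
    Cofinitary (genWith G g) /\
    (forall f, F f -> forall N, exists n, N <= n /\ f n = g n) /\
    (forall w, ReducedWord G w -> has_x w -> RecursiveIn z (word_eval g ginv w)).
Proof.
  destruct HGcount as [eG HeG]. destruct HFcount as [eF HeF].
  exists (g_lim G F z eG eF), (g_lim_inv G F z eG eF).
  split; [intros n; eapply g_lim_right_inv; eauto|].
  split; [intros n; eapply g_lim_left_inv; eauto|].
  split; [apply genWith_lim_cofinitary; auto|].
  split; [apply g_lim_hits; auto|apply g_lim_codes; auto].
Qed.
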